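(* Let $0<\sigma\le 1$ and let $(u,m)$ be the classical solution of the system \[ \begin{cases} u_t + \frac{\sigma^2}{2} u_{xx} - ru + G(u_x,m)^2 = 0, & 0<t<T,\ 0<x<L,\\ m_t - \frac{\sigma^2}{2} m_{xx} - \{G(u_x,m)m\}_x = 0, & 0<t<T,\ 0<x<L,\\ m(0,x)=m_0(x),\quad u(T,x)=u_T(x), & 0\le x\le L,\\ u_x(t,0)=u_x(t,L)=0, & 0\le t\le T,\\ \frac{\sigma^2}{2} m_x(t,x) + G(u_x,m)m(t,x) = 0, & 0\le t\le T,\ x\in\{0,L\}, \end{cases} \] where $G(u_x,m)(t,x) := \frac12\left(b + c\int_0^L u_x(t,y)m(t,y)\,dy - u_x(t,x)\right)$. Then $\|u\|_{C^{1/3}([0,T]\times[0,L])}\le C$, where $C$ does not depend on $\sigma$.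
   Context: Standing setting: $L,T,r>0$ are constants, $\epsilon>0$, and $b=\frac{2}{2+\epsilon}$, $c=\frac{\epsilon}{2+\epsilon}$. The data satisfy: $u_T,m_0\in C^{2+\gamma}([0,L])$ for some $\gamma>0$; $u_T'(0)=u_T'(L)=0$ and $m_0(0)=m_0'(0)=m_0(L)=m_0'(L)=0$; $m_0$ is a probability density on $[0,L]$; $u_T\ge 0$. Constants may depend on $u_T,m_0,L,T,r,\epsilon$ but not on $\sigma\in(0,1]$. $C^{1/3}$ denotes the space of Hölder continuous functions with exponent $1/3$ (with its usual norm). *)

From Stdlib Require Import Reals Lra.
From Coquelicot Require Import Coquelicot.
Open Scope R_scope.

Definition in_rect (T L t x : R) : Prop := 0 <= t <= T /\ 0 <= x <= L.

Definition cont_on_rect (T L : R) (f : R -> R -> R) : Prop :=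
  forall t x, in_rect T L t x ->
    filterlim (fun p : R * R => f (fst p) (snd p))
      (within (fun p : R * R => in_rect T L (fst p) (snd p)) (locally (t, x)))
      (locally (f t x)).

Definition cont_on_seg (L : R) (g : R -> R) : Prop :=
  forall x, 0 <= x <= L ->
    filterlim g (within (fun y => 0 <= y <= L) (locally x)) (locally (g x)).

(* C^{2+gamma}([0,L]) with given first and second derivatives g1, g2:
   g, g1, g2 continuous on [0,L], g' = g1, g1' = g2 on (0,L)
   (hence at the endpoints g1, g2 are the one-sided derivatives), and g2 is
   gamma-Hoelder on [0,L]. *)
Definition C2gamma (L gamma : R) (g g1 g2 : R -> R) : Prop :=
  cont_on_seg L g /\ cont_on_seg L g1 /\ cont_on_seg L g2 /\
  (forall x, 0 < x < L -> is_derive g x (g1 x)) /\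
  (forall x, 0 < x < L -> is_derive g1 x (g2 x)) /\
  exists K, forall x y, 0 <= x <= L -> 0 <= y <= L ->
    Rabs (g2 x - g2 y) <= K * Rpower (Rabs (x - y)) gamma.

Definition Gfun (b c L : R) (ux m : R -> R -> R) (t x : R) : R :=
  / 2 * (b + c * RInt (fun y => ux t y * m t y) 0 L - ux t x).

Definition classical_solution (L T r eps sigma : R) (uT m0 : R -> R)
    (u m : R -> R -> R) : Prop :=
  let b := 2 / (2 + eps) in
  let c := eps / (2 + eps) in
  exists ut ux uxx mt mx mxx : R -> R -> R,
    cont_on_rect T L u /\ cont_on_rect T L ut /\ cont_on_rect T L ux /\
    cont_on_rect T L uxx /\
    cont_on_rect T L m /\ cont_on_rect T L mt /\ cont_on_rect T L mx /\
    cont_on_rect T L mxx /\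
    (forall t x, 0 < t < T -> 0 < x < L ->
       is_derive (fun s => u s x) t (ut t x) /\
       is_derive (fun y => u t y) x (ux t x) /\
       is_derive (fun y => ux t y) x (uxx t x) /\
       is_derive (fun s => m s x) t (mt t x) /\
       is_derive (fun y => m t y) x (mx t x) /\
       is_derive (fun y => mx t y) x (mxx t x)) /\
    (forall t x, 0 < t < T -> 0 < x < L ->
       ut t x + sigma ^ 2 / 2 * uxx t x - r * u t x
         + (Gfun b c L ux m t x) ^ 2 = 0) /\
    (forall t x, 0 < t < T -> 0 < x < L ->
       is_derive (fun y => Gfun b c L ux m t y * m t y) x
         (mt t x - sigma ^ 2 / 2 * mxx t x)) /\
    (forall x, 0 <= x <= L -> m 0 x = m0 x /\ u T x = uT x) /\
    (forall t, 0 <= t <= T -> ux t 0 = 0 /\ ux t L = 0) /\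
    (forall t, 0 <= t <= T ->
       sigma ^ 2 / 2 * mx t 0 + Gfun b c L ux m t 0 * m t 0 = 0 /\
       sigma ^ 2 / 2 * mx t L + Gfun b c L ux m t L * m t L = 0).

Definition dist2 (t x s y : R) : R := sqrt ((t - s) ^ 2 + (x - y) ^ 2).

Definition holder13_norm (T L : R) (u : R -> R -> R) : Rbar :=
  Rbar_plus
    (Lub_Rbar (fun v => exists t x, in_rect T L t x /\ v = Rabs (u t x)))
    (Lub_Rbar (fun v => exists t x s y, in_rect T L t x /\ in_rect T L s y /\
        (t, x) <> (s, y) /\
        v = Rabs (u t x - u s y) / Rpower (dist2 t x s y) (1 / 3))).

(* The Hamiltonian H(t, p) = G^2 depends on x only through p = u_x, with G affine in p.

   Doubling variables, u(t,x) - u(t,y) - M (x - y) has no positive maximum on {y <= x}: at an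
   interior maximum u_x(t,x) = M = u_x(t,y), so the Hamiltonians cancel and the equation makes the
   maximum increase in time; on the boundary the Neumann condition gives an ascent direction. Hence
   u is M-Lipschitz in x with M the Lipschitz constant of u_T, whatever sigma.

   A maximum principle for the weighted function exp(-la t - be (x - L/2)^2) m shows m >= 0, and the
   no-flux condition conserves mass, so m(t) is a probability density and |int u_x m| <= M. The
   Hamiltonian is then bounded independently of sigma.

   Comparison with barriers c + A (x - x0)^2 + B (s - t) bounds sup |u|, and with A ~ M^2 / sqrt(s - t)
   gives |u(t,x) - u(s,x)| <= C sqrt(s - t); only sigma <= 1 enters the constants. Lipschitz in x and
   1/2-Hölder in t on a bounded rectangle imply the C^{1/3} bound. *)

From Stdlib Require Import Reals Lra ClassicalEpsilon Classical.
From Coquelicot Require Import Coquelicot.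
Open Scope R_scope.

Ltac derive_from_hyps :=
  auto_derive;
  repeat match goal with
  | |- _ /\ _ => split
  | |- True => exact I
  | |- ex_derive _ _ => eexists; eassumption
  | |- context [Derive ?g ?y] =>
      match goal with H : is_derive _ y ?d |- _ =>
        replace (Derive g y) with d by (symmetry; apply is_derive_unique; exact H)
      end
  end;
  try solve [ring | field].

Ltac unify_exp_args :=
  match goal with |- context [exp ?a] => match goal with |- context [exp ?b] =>
    tryif constr_eq a b then fail else replace (exp a) with (exp b) by (f_equal; ring) end end.

Lemma ball_Rabs (x e y : R) : ball x e y <-> Rabs (y - x) < e.
Proof. reflexivity. Qed.

Lemma Rmult_abs_le_young M e z : 0 < e -> M * Rabs z <= e + M ^ 2 / (4 * e) * z ^ 2.
Proof.
  intros He. rewrite <- (pow2_abs z).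
  assert (Hsq : 0 <= (M * Rabs z - 2 * e) ^ 2 / (4 * e)) by (apply Rdiv_le_0_compat; [apply pow2_ge_0 | lra]).
  replace ((M * Rabs z - 2 * e) ^ 2 / (4 * e)) with (e + M ^ 2 / (4 * e) * Rabs z ^ 2 - M * Rabs z)
    in Hsq by (field; lra).
  lra.
Qed.

(** * Continuity and derivatives on a segment *)

Definition clamp (a b x : R) := Rmax a (Rmin b x).

Lemma clamp_in a b x : a <= b -> a <= clamp a b x <= b.
Proof. intros. unfold clamp, Rmax, Rmin. repeat destruct Rle_dec; lra. Qed.

Lemma clamp_id a b x : a <= x <= b -> clamp a b x = x.
Proof. intros. unfold clamp, Rmax, Rmin. repeat destruct Rle_dec; lra. Qed.

Lemma clamp_lip a b x y : a <= b -> Rabs (clamp a b x - clamp a b y) <= Rabs (x - y).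
Proof.
  intros. unfold clamp, Rmax, Rmin.
  repeat destruct Rle_dec; unfold Rabs; repeat destruct Rcase_abs; lra.
Qed.

Lemma continuity_pt_clamp a b x : a <= b -> continuity_pt (clamp a b) x.
Proof.
  intros Hab. apply continuity_pt_filterlim, filterlim_locally. intros e.
  exists e. intros y Hy. apply ball_Rabs in Hy. apply ball_Rabs.
  eapply Rle_lt_trans; [apply clamp_lip; exact Hab | exact Hy].
Qed.

Definition seg_cont (a b : R) (f : R -> R) (z : R) :=
  forall eps, 0 < eps -> exists d, 0 < d /\
    forall w, a <= w <= b -> Rabs (w - z) < d -> Rabs (f w - f z) < eps.

Lemma seg_cont_clamp a b f z : a <= z <= b ->
  seg_cont a b f z <-> continuity_pt (fun x => f (clamp a b x)) z.
Proof.
  intros Hz. assert (Hab : a <= b) by lra.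
  rewrite continuity_pt_filterlim, filterlim_locally. split.
  - intros Hf [e He]. destruct (Hf e He) as [d [Hd Hw]].
    exists (mkposreal d Hd). intros y Hy. change (Rabs (y - z) < d) in Hy. apply ball_Rabs.
    pose proof (clamp_lip a b y z Hab) as Hlip. rewrite (clamp_id a b z Hz) in *.
    apply Hw; [apply clamp_in|]; lra.
  - intros Hf e He. destruct (Hf (mkposreal e He)) as [[d Hd] Hw].
    exists d. split; [exact Hd|]. intros w Hw1 Hw2.
    specialize (Hw w Hw2). apply ball_Rabs in Hw. rewrite !clamp_id in Hw; auto.
Qed.

Lemma seg_cont_of_continuity_pt a b f z : continuity_pt f z -> seg_cont a b f z.
Proof.
  intros Hf e He. rewrite continuity_pt_filterlim, filterlim_locally in Hf.
  destruct (Hf (mkposreal e He)) as [[d Hd] Hw].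
  exists d. split; [exact Hd|]. intros w _ Hwz. exact (Hw w Hwz).
Qed.

Lemma continuity_pt_clamp_comp a b f y : a <= b -> (forall z, a <= z <= b -> seg_cont a b f z) ->
  continuity_pt (fun x => f (clamp a b x)) y.
Proof.
  intros Hab Hf.
  apply (continuity_pt_ext (fun x => (fun w => f (clamp a b w)) (clamp a b x))).
  { intros x. rewrite (clamp_id a b (clamp a b x)); [reflexivity | apply clamp_in; exact Hab]. }
  apply (continuity_pt_comp (clamp a b) (fun w => f (clamp a b w))); [apply continuity_pt_clamp; exact Hab|].
  apply seg_cont_clamp; [apply clamp_in; exact Hab|]. apply Hf, clamp_in. exact Hab.
Qed.

Lemma seg_cont_const a b c z : seg_cont a b (fun _ => c) z.
Proof. intros e He. exists 1. split; [lra|]. intros. rewrite Rminus_eq_0, Rabs_R0. exact He. Qed.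

Lemma seg_cont_id a b z : seg_cont a b (fun w => w) z.
Proof. intros e He. exists e. split; [exact He|]. intros. assumption. Qed.

Lemma seg_cont_plus a b f g z : a <= z <= b ->
  seg_cont a b f z -> seg_cont a b g z -> seg_cont a b (fun w => f w + g w) z.
Proof. intros Hz. rewrite !(seg_cont_clamp a b _ z Hz). apply continuity_pt_plus. Qed.

Lemma seg_cont_opp a b f z : a <= z <= b ->
  seg_cont a b f z -> seg_cont a b (fun w => - f w) z.
Proof. intros Hz. rewrite !(seg_cont_clamp a b _ z Hz). apply continuity_pt_opp. Qed.

Lemma seg_cont_minus a b f g z : a <= z <= b ->
  seg_cont a b f z -> seg_cont a b g z -> seg_cont a b (fun w => f w - g w) z.
Proof. intros Hz. rewrite !(seg_cont_clamp a b _ z Hz). apply continuity_pt_minus. Qed.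

Lemma seg_cont_mult a b f g z : a <= z <= b ->
  seg_cont a b f z -> seg_cont a b g z -> seg_cont a b (fun w => f w * g w) z.
Proof. intros Hz. rewrite !(seg_cont_clamp a b _ z Hz). apply continuity_pt_mult. Qed.

Lemma seg_cont_abs a b f z : a <= z <= b -> seg_cont a b f z -> seg_cont a b (fun w => Rabs (f w)) z.
Proof.
  intros Hz. rewrite !(seg_cont_clamp a b _ z Hz). intros Hf.
  apply (continuity_pt_comp (fun x => f (clamp a b x)) Rabs); [exact Hf | apply Rcontinuity_abs].
Qed.

Lemma seg_cont_sub a b a' b' f z : a <= a' -> b' <= b -> seg_cont a b f z -> seg_cont a' b' f z.
Proof.
  intros Ha Hb Hf e He. destruct (Hf e He) as [d [Hd Hw]].
  exists d. split; [exact Hd|]. intros w Hw' Hwz. apply Hw; [lra | exact Hwz].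
Qed.

Ltac seg_cont_auto :=
  repeat (first [ apply seg_cont_plus | apply seg_cont_minus | apply seg_cont_mult
                | apply seg_cont_opp | apply seg_cont_const | apply seg_cont_id ]; try lra).

Lemma seg_cont_max_attained (f : R -> R) a b : a <= b -> (forall z, a <= z <= b -> seg_cont a b f z) ->
  exists z, a <= z <= b /\ forall w, a <= w <= b -> f w <= f z.
Proof.
  intros Hab Hf.
  destruct (continuity_ab_maj (fun x => f (clamp a b x)) a b Hab) as [z [Hmax Hz]].
  { intros c Hc. apply seg_cont_clamp; auto. }
  exists z. split; [exact Hz|]. intros w Hw. specialize (Hmax w Hw). rewrite !clamp_id in Hmax; auto.
Qed.

Lemma seg_cont_le_of_interior (f : R -> R) a b p c : a < b -> a <= p <= b -> seg_cont a b f p ->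
  (forall z, a < z < b -> f z <= c) -> f p <= c.
Proof.
  intros Hab Hp Hf Hz. destruct (Rle_or_lt (f p) c) as [H|H]; [exact H|]. exfalso.
  destruct (Hf (f p - c) ltac:(lra)) as [d [Hd Hw]].
  set (e := Rmin (d / 2) ((b - a) / 4)).
  assert (e <= d / 2) by apply Rmin_l. assert (e <= (b - a) / 4) by apply Rmin_r.
  assert (0 < e) by (apply Rmin_glb_lt; lra).
  set (q := if Rle_dec p ((a + b) / 2) then p + e else p - e).
  assert (Hq : a < q < b /\ Rabs (q - p) < d).
  { unfold q. destruct Rle_dec; unfold Rabs; destruct Rcase_abs; lra. }
  specialize (Hw q ltac:(lra) (proj2 Hq)). specialize (Hz q (proj1 Hq)).
  unfold Rabs in Hw. destruct Rcase_abs in Hw; lra.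
Qed.

Lemma seg_cont_abs_le_of_interior (f : R -> R) a b p K : a < b -> a <= p <= b -> seg_cont a b f p ->
  (forall z, a < z < b -> Rabs (f z) <= K) -> Rabs (f p) <= K.
Proof.
  intros Hab Hp Hf Hz. apply Rabs_le. split.
  - cut (- f p <= K); [lra|]. apply (seg_cont_le_of_interior (fun z => - f z) a b); auto.
    + apply seg_cont_opp; auto.
    + intros z Hz'. specialize (Hz z Hz'). apply Rabs_le_between in Hz. lra.
  - apply (seg_cont_le_of_interior f a b); auto.
    intros z Hz'. specialize (Hz z Hz'). apply Rabs_le_between in Hz. lra.
Qed.

Lemma exists_gt_right_of_derive_pos (f : R -> R) x d : is_derive f x d -> 0 < d ->
  forall e, 0 < e -> exists y, x < y < x + e /\ f x < f y.
Proof.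
  intros Hd Hpos e He. apply is_derive_Reals in Hd.
  destruct (Hd d Hpos) as [[dl Hdl] Hq]. simpl in Hq.
  set (h := Rmin (dl / 2) (e / 2)).
  assert (0 < h) by (apply Rmin_glb_lt; lra).
  assert (h <= dl / 2) by apply Rmin_l. assert (h <= e / 2) by apply Rmin_r.
  specialize (Hq h ltac:(lra)). rewrite Rabs_pos_eq in Hq by lra. specialize (Hq ltac:(lra)).
  apply Rabs_lt_between in Hq.
  assert (0 < (f (x + h) - f x) / h * h) by (apply Rmult_lt_0_compat; lra).
  assert (f (x + h) - f x = (f (x + h) - f x) / h * h) by (field; lra).
  exists (x + h). split; lra.
Qed.

Lemma exists_gt_left_of_derive_neg (f : R -> R) x d : is_derive f x d -> d < 0 ->
  forall e, 0 < e -> exists y, x - e < y < x /\ f x < f y.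
Proof.
  intros Hd Hneg e He. apply is_derive_Reals in Hd.
  destruct (Hd (- d) ltac:(lra)) as [[dl Hdl] Hq]. simpl in Hq.
  set (h := Rmin (dl / 2) (e / 2)).
  assert (0 < h) by (apply Rmin_glb_lt; lra).
  assert (h <= dl / 2) by apply Rmin_l. assert (h <= e / 2) by apply Rmin_r.
  specialize (Hq (- h) ltac:(lra)). rewrite Rabs_Ropp, Rabs_pos_eq in Hq by lra. specialize (Hq ltac:(lra)).
  apply Rabs_lt_between in Hq.
  assert (0 < - ((f (x + - h) - f x) / - h) * h) by (apply Rmult_lt_0_compat; lra).
  assert (f (x + - h) - f x = - ((f (x + - h) - f x) / - h) * h) by (field; lra).
  exists (x + - h). split; lra.
Qed.

Lemma seg_MVT (f f1 : R -> R) a b : a < b -> (forall z, a <= z <= b -> seg_cont a b f z) ->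
  (forall x, a < x < b -> is_derive f x (f1 x)) -> exists c, a < c < b /\ f b - f a = f1 c * (b - a).
Proof.
  intros Hab Hc Hd.
  set (g := fun x => f (clamp a b x)).
  assert (Hgd : forall c, a < c < b -> is_derive g c (f1 c)).
  { intros c Hcc. apply (is_derive_ext_loc f); [|apply Hd; exact Hcc].
    set (r := Rmin (c - a) (b - c)). assert (Hr : 0 < r) by (apply Rmin_glb_lt; lra).
    exists (mkposreal r Hr). intros y Hy. change (Rabs (y - c) < r) in Hy.
    assert (r <= c - a) by apply Rmin_l. assert (r <= b - c) by apply Rmin_r.
    apply Rabs_lt_between in Hy. unfold g. rewrite clamp_id; [reflexivity | lra]. }
  assert (pr1 : forall c, a < c < b -> derivable_pt g c).
  { intros c Hcc. apply ex_derive_Reals_0. exists (f1 c). apply Hgd; auto. }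
  assert (pr2 : forall c, a < c < b -> derivable_pt id c) by (intros; apply derivable_pt_id).
  destruct (MVT g id a b pr1 pr2 Hab) as [c [P Hm]].
  - intros c Hcc. apply seg_cont_clamp; auto.
  - intros c Hcc. apply derivable_continuous_pt, derivable_pt_id.
  - exists c. split; [exact P|].
    rewrite (derive_pt_eq_0 g c (f1 c) (pr1 c P)) in Hm by (apply is_derive_Reals; apply Hgd; auto).
    rewrite (derive_pt_eq_0 id c 1 (pr2 c P)) in Hm by apply derivable_pt_lim_id.
    unfold g, id in Hm. rewrite !clamp_id in Hm by lra. lra.
Qed.

Lemma interior_max_derive (f f1 : R -> R) f2 a b x : a < x < b ->
  (forall y, a < y < b -> is_derive f y (f1 y)) -> is_derive f1 x f2 ->
  (forall y, a < y < b -> f y <= f x) -> f1 x = 0 /\ f2 <= 0.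
Proof.
  intros Hx Hd1 Hd2 Hmax.
  assert (Hcrit : f1 x = 0).
  { destruct (Rtotal_order (f1 x) 0) as [Hl|[He|Hg]]; auto.
    - destruct (exists_gt_left_of_derive_neg f x (f1 x) (Hd1 x Hx) Hl (x - a) ltac:(lra)) as [y [Hy Hf]].
      specialize (Hmax y ltac:(lra)). lra.
    - destruct (exists_gt_right_of_derive_pos f x (f1 x) (Hd1 x Hx) Hg (b - x) ltac:(lra)) as [y [Hy Hf]].
      specialize (Hmax y ltac:(lra)). lra. }
  split; [exact Hcrit|].
  destruct (Rle_or_lt f2 0) as [Hle|Hgt]; [exact Hle|]. exfalso.
  (* f1 vanishes at x and increases, so f increases to the right of x *)
  apply is_derive_Reals in Hd2.
  destruct (Hd2 f2 Hgt) as [[dl Hdl] Hq]. simpl in Hq.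
  set (h := Rmin (dl / 2) ((b - x) / 2)).
  assert (0 < h) by (apply Rmin_glb_lt; lra).
  assert (h <= dl / 2) by apply Rmin_l. assert (h <= (b - x) / 2) by apply Rmin_r.
  destruct (MVT_cor2 f f1 x (x + h) ltac:(lra)) as [c [Hc Hci]].
  { intros c Hc. apply is_derive_Reals, Hd1. lra. }
  specialize (Hq (c - x) ltac:(lra)). rewrite Rabs_pos_eq in Hq by lra. specialize (Hq ltac:(lra)).
  replace (x + (c - x)) with c in Hq by ring. rewrite Hcrit, Rminus_0_r in Hq.
  apply Rabs_lt_between in Hq.
  assert (Hf1c : 0 < f1 c / (c - x) * (c - x)) by (apply Rmult_lt_0_compat; lra).
  replace (f1 c / (c - x) * (c - x)) with (f1 c) in Hf1c by (field; lra).
  specialize (Hmax (x + h) ltac:(lra)).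
  assert (0 < f1 c * (x + h - x)) by (apply Rmult_lt_0_compat; lra). lra.
Qed.

Lemma seg_not_max_left (f f1 : R -> R) a b : a < b -> (forall z, a <= z <= b -> seg_cont a b f z) ->
  (forall x, a < x < b -> is_derive f x (f1 x)) -> seg_cont a b f1 a -> 0 < f1 a ->
  exists y, a < y < b /\ f a < f y.
Proof.
  intros Hab Hc Hd Hc1 Hpos. destruct (Hc1 (f1 a) Hpos) as [d [Hdp Hnear]].
  set (y := Rmin (a + d / 2) ((a + b) / 2)).
  assert (y <= a + d / 2) by apply Rmin_l. assert (y <= (a + b) / 2) by apply Rmin_r.
  assert (Hay : a < y) by (apply Rmin_glb_lt; lra).
  destruct (seg_MVT f f1 a y Hay) as [c [Hc1' Hc2]].
  - intros z Hz. apply (seg_cont_sub a b); try lra. apply Hc. lra.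
  - intros x Hx. apply Hd. lra.
  - exists y. split; [lra|].
    specialize (Hnear c ltac:(lra) ltac:(rewrite Rabs_pos_eq; lra)). apply Rabs_lt_between in Hnear.
    assert (0 < f1 c * (y - a)) by (apply Rmult_lt_0_compat; lra). lra.
Qed.

Lemma seg_not_max_right (f f1 : R -> R) a b : a < b -> (forall z, a <= z <= b -> seg_cont a b f z) ->
  (forall x, a < x < b -> is_derive f x (f1 x)) -> seg_cont a b f1 b -> f1 b < 0 ->
  exists y, a < y < b /\ f b < f y.
Proof.
  intros Hab Hc Hd Hc1 Hneg. destruct (Hc1 (- f1 b) ltac:(lra)) as [d [Hdp Hnear]].
  set (y := Rmax (b - d / 2) ((a + b) / 2)).
  assert (b - d / 2 <= y) by apply Rmax_l. assert ((a + b) / 2 <= y) by apply Rmax_r.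
  assert (Hyb : y < b) by (apply Rmax_lub_lt; lra).
  destruct (seg_MVT f f1 y b Hyb) as [c [Hc1' Hc2]].
  - intros z Hz. apply (seg_cont_sub a b); try lra. apply Hc. lra.
  - intros x Hx. apply Hd. lra.
  - exists y. split; [lra|].
    specialize (Hnear c ltac:(lra) ltac:(rewrite Rabs_left; lra)). apply Rabs_lt_between in Hnear.
    assert (0 < - f1 c * (b - y)) by (apply Rmult_lt_0_compat; lra). lra.
Qed.

Lemma derive_abs_le_of_lipschitz (f : R -> R) x d M : is_derive f x d ->
  (exists dl, 0 < dl /\ forall h, h <> 0 -> Rabs h < dl -> Rabs (f (x + h) - f x) <= M * Rabs h) ->
  Rabs d <= M.
Proof.
  intros Hd [dl [Hdl Hlip]]. apply is_derive_Reals in Hd.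
  destruct (Rle_or_lt (Rabs d) M) as [H|H]; [exact H|]. exfalso.
  destruct (Hd (Rabs d - M) ltac:(lra)) as [[de Hde] Hq]. simpl in Hq.
  set (h := Rmin (dl / 2) (de / 2)).
  assert (Hh : 0 < h) by (apply Rmin_glb_lt; lra).
  assert (h <= dl / 2) by apply Rmin_l. assert (h <= de / 2) by apply Rmin_r.
  assert (Habs : Rabs h = h) by (apply Rabs_pos_eq; lra).
  specialize (Hq h ltac:(lra) ltac:(lra)). specialize (Hlip h ltac:(lra) ltac:(lra)).
  rewrite Habs in Hlip.
  assert (Rabs ((f (x + h) - f x) / h) <= M).
  { unfold Rdiv. rewrite Rabs_mult, Rabs_inv, Habs.
    apply Rmult_le_reg_r with h; [exact Hh|]. rewrite Rmult_assoc, Rinv_l by lra. lra. }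
  pose proof (Rabs_triang_inv d ((f (x + h) - f x) / h)).
  rewrite Rabs_minus_sym in Hq. lra.
Qed.

Lemma ex_RInt_seg_cont (f : R -> R) a b : a < b -> (forall z, a <= z <= b -> seg_cont a b f z) ->
  ex_RInt f a b.
Proof.
  intros Hab Hc. apply (ex_RInt_ext (fun x => f (clamp a b x))).
  - intros x Hx. rewrite Rmin_left, Rmax_right in Hx by lra. rewrite clamp_id; [reflexivity | lra].
  - apply (@ex_RInt_continuous R_CompleteNormedModule). intros z Hz.
    rewrite Rmin_left, Rmax_right in Hz by lra.
    apply continuity_pt_filterlim, seg_cont_clamp, Hc; exact Hz.
Qed.

Lemma seg_const_of_derive_zero (f f1 : R -> R) a b : a < b -> (forall z, a <= z <= b -> seg_cont a b f z) ->
  (forall x, a < x < b -> is_derive f x (f1 x)) -> (forall x, a < x < b -> f1 x = 0) -> f b = f a.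
Proof.
  intros Hab Hc Hd H0. destruct (seg_MVT f f1 a b Hab Hc Hd) as [c [Hc1 Hc2]].
  rewrite H0 in Hc2 by exact Hc1. lra.
Qed.

Lemma RInt_derive_seg (P g : R -> R) a b : a < b ->
  (forall z, a <= z <= b -> seg_cont a b P z) -> (forall z, a <= z <= b -> seg_cont a b g z) ->
  (forall x, a < x < b -> is_derive P x (g x)) ->
  RInt g a b = P b - P a.
Proof.
  intros Hab HP Hg Hd.
  set (gt := fun y => g (clamp a b y)).
  assert (Hgt : forall y, continuous gt y).
  { intros y. apply continuity_pt_filterlim, continuity_pt_clamp_comp; [lra | exact Hg]. }
  assert (Hgt_eq : forall y, a <= y <= b -> gt y = g y).
  { intros y Hy. unfold gt. rewrite (clamp_id a b y Hy). reflexivity. }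
  set (Ig := fun x => RInt gt a x).
  assert (HIg : forall x, is_derive Ig x (gt x)).
  { intros x. apply (is_derive_RInt gt Ig a x); [|apply Hgt].
    exists (mkposreal 1 Rlt_0_1). intros z _. apply (@RInt_correct R_CompleteNormedModule).
    apply (@ex_RInt_continuous R_CompleteNormedModule). intros; apply Hgt. }
  assert (Hconst : Ig b - P b = Ig a - P a).
  { apply (seg_const_of_derive_zero (fun x => Ig x - P x) (fun x => gt x - g x) a b Hab).
    - intros z Hz. apply seg_cont_minus; auto. apply seg_cont_of_continuity_pt.
      apply continuity_pt_filterlim, (@ex_derive_continuous R_AbsRing R_NormedModule).
      exists (gt z). apply HIg.
    - intros x Hx. specialize (HIg x). specialize (Hd x Hx). derive_from_hyps.
    - intros x Hx. rewrite Hgt_eq; lra. }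
  assert (RInt gt a a = 0) by exact (RInt_point a gt). unfold Ig in Hconst.
  rewrite <- (RInt_ext gt g a b); [lra|].
  intros x Hx. rewrite Rmin_left, Rmax_right in Hx by lra. apply Hgt_eq. lra.
Qed.

(** * Uniform continuity on a rectangle *)

Definition ucont_rect (a b c d : R) (f : R -> R -> R) :=
  forall eps, 0 < eps -> exists delta, 0 < delta /\
    forall t x s y, a <= t <= b -> c <= x <= d -> a <= s <= b -> c <= y <= d ->
      Rabs (t - s) < delta -> Rabs (x - y) < delta -> Rabs (f t x - f s y) < eps.

Lemma ucont_rect_of_continuity_2d a b c d f :
  (forall t x, a <= t <= b -> c <= x <= d -> continuity_2d_pt f t x) -> ucont_rect a b c d f.
Proof.
  intros Hc eps He. destruct (uniform_continuity_2d f a b c d Hc (mkposreal eps He)) as [[dl Hd] H].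
  exists dl. split; [exact Hd|]. intros t x s y Ht Hx Hs Hy Hts Hxy.
  rewrite Rabs_minus_sym in Hts, Hxy |- *. exact (H t x s y Ht Hx Hs Hy Hts Hxy).
Qed.

Lemma ucont_rect_clamp a b c d f : a <= b -> c <= d ->
  ucont_rect a b c d f <->
  forall t x, continuity_2d_pt (fun t x => f (clamp a b t) (clamp c d x)) t x.
Proof.
  intros Hab Hcd. split.
  - intros Hf t x [e He]. destruct (Hf e He) as [dl [Hdl Hw]].
    exists (mkposreal dl Hdl). intros u v Hu Hv. simpl in *.
    pose proof (clamp_lip a b u t Hab). pose proof (clamp_lip c d v x Hcd).
    apply Hw; try apply clamp_in; lra.
  - intros Hf. assert (Hu : ucont_rect a b c d (fun t x => f (clamp a b t) (clamp c d x)))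
      by (apply ucont_rect_of_continuity_2d; auto).
    intros eps He. destruct (Hu eps He) as [dl [Hdl Hw]]. exists dl. split; [exact Hdl|].
    intros t x s y Ht Hx Hs Hy Hts Hxy.
    specialize (Hw t x s y Ht Hx Hs Hy Hts Hxy). rewrite !clamp_id in Hw; auto.
Qed.

Lemma ucont_rect_plus a b c d f g : a <= b -> c <= d -> ucont_rect a b c d f -> ucont_rect a b c d g ->
  ucont_rect a b c d (fun t x => f t x + g t x).
Proof. intros Hab Hcd. rewrite !(ucont_rect_clamp a b c d _ Hab Hcd). intros; apply continuity_2d_pt_plus; auto. Qed.

Lemma ucont_rect_minus a b c d f g : a <= b -> c <= d -> ucont_rect a b c d f -> ucont_rect a b c d g ->
  ucont_rect a b c d (fun t x => f t x - g t x).
Proof. intros Hab Hcd. rewrite !(ucont_rect_clamp a b c d _ Hab Hcd). intros; apply continuity_2d_pt_minus; auto. Qed.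

Lemma ucont_rect_opp a b c d f : a <= b -> c <= d -> ucont_rect a b c d f ->
  ucont_rect a b c d (fun t x => - f t x).
Proof. intros Hab Hcd. rewrite !(ucont_rect_clamp a b c d _ Hab Hcd). intros; apply continuity_2d_pt_opp; auto. Qed.

Lemma ucont_rect_mult a b c d f g : a <= b -> c <= d -> ucont_rect a b c d f -> ucont_rect a b c d g ->
  ucont_rect a b c d (fun t x => f t x * g t x).
Proof. intros Hab Hcd. rewrite !(ucont_rect_clamp a b c d _ Hab Hcd). intros; apply continuity_2d_pt_mult; auto. Qed.

Lemma ucont_rect_fun_t a b c d (g : R -> R) : (forall t, ex_derive g t) -> ucont_rect a b c d (fun t x => g t).
Proof.
  intros Hg. apply ucont_rect_of_continuity_2d. intros t x _ _.
  apply (continuity_1d_2d_pt_comp g (fun u v => u)); [|apply continuity_2d_pt_id1].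
  apply continuity_pt_filterlim, (@ex_derive_continuous R_AbsRing R_NormedModule), Hg.
Qed.

Lemma ucont_rect_fun_x a b c d (g : R -> R) : (forall x, ex_derive g x) -> ucont_rect a b c d (fun t x => g x).
Proof.
  intros Hg. apply ucont_rect_of_continuity_2d. intros t x _ _.
  apply (continuity_1d_2d_pt_comp g (fun u v => v)); [|apply continuity_2d_pt_id2].
  apply continuity_pt_filterlim, (@ex_derive_continuous R_AbsRing R_NormedModule), Hg.
Qed.

Lemma ucont_rect_sub a b c d a' b' c' d' f : a <= a' -> b' <= b -> c <= c' -> d' <= d ->
  ucont_rect a b c d f -> ucont_rect a' b' c' d' f.
Proof.
  intros Ha Hb Hc Hd Hf eps He. destruct (Hf eps He) as [dl [Hdl Hw]].
  exists dl. split; [exact Hdl|]. intros. apply Hw; auto; lra.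
Qed.

Lemma ucont_rect_ext a b c d f g : (forall t x, f t x = g t x) -> ucont_rect a b c d f -> ucont_rect a b c d g.
Proof.
  intros Hfg Hf eps He. destruct (Hf eps He) as [dl [Hdl Hw]].
  exists dl. split; [exact Hdl|]. intros. rewrite <- !Hfg. auto.
Qed.

Lemma ucont_rect_time_reversal a b c d f : ucont_rect a b c d f -> ucont_rect (- b) (- a) c d (fun s x => f (- s) x).
Proof.
  intros Hf eps He. destruct (Hf eps He) as [dl [Hdl Hw]]. exists dl. split; [exact Hdl|].
  intros t x s y Ht Hx Hs Hy Hts Hxy. apply Hw; try lra.
  replace (- t - - s) with (- (t - s)) by ring. rewrite Rabs_Ropp. exact Hts.
Qed.

Lemma ucont_rect_seg_cont_x a b c d f t z : ucont_rect a b c d f -> a <= t <= b -> c <= z <= d ->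
  seg_cont c d (f t) z.
Proof.
  intros Hf Ht Hz eps He. destruct (Hf eps He) as [dl [Hdl Hw]]. exists dl. split; [exact Hdl|].
  intros w Hw' Hwz. apply Hw; auto. rewrite Rminus_eq_0, Rabs_R0. exact Hdl.
Qed.

Lemma ucont_rect_seg_cont_t a b c d f t z : ucont_rect a b c d f -> a <= t <= b -> c <= z <= d ->
  seg_cont a b (fun s => f s z) t.
Proof.
  intros Hf Ht Hz eps He. destruct (Hf eps He) as [dl [Hdl Hw]]. exists dl. split; [exact Hdl|].
  intros w Hw' Hwt. apply Hw; auto. rewrite Rminus_eq_0, Rabs_R0. exact Hdl.
Qed.

Lemma ucont_rect_abs_le_of_interior a b c d f K : a < b -> c < d -> ucont_rect a b c d f ->
  (forall t x, a < t < b -> c < x < d -> Rabs (f t x) <= K) ->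
  forall t x, a <= t <= b -> c <= x <= d -> Rabs (f t x) <= K.
Proof.
  intros Hab Hcd Hf Hint t x Ht Hx.
  apply (seg_cont_abs_le_of_interior (fun s => f s x) a b); [lra | exact Ht | |].
  - apply (ucont_rect_seg_cont_t a b c d); auto.
  - intros s Hs. apply (seg_cont_abs_le_of_interior (f s) c d); [lra | exact Hx | |].
    + apply (ucont_rect_seg_cont_x a b c d); auto; lra.
    + intros; apply Hint; auto.
Qed.

Lemma max_attained_param {X : Type} (K : X -> Prop) (F : R -> X -> R) a b : a <= b ->
  (forall t, a <= t <= b -> exists k, K k /\ forall k', K k' -> F t k' <= F t k) ->
  (forall eps, 0 < eps -> exists d, 0 < d /\ forall t t' k, a <= t <= b -> a <= t' <= b ->
      Rabs (t - t') < d -> K k -> Rabs (F t k - F t' k) < eps) ->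
  exists t k, a <= t <= b /\ K k /\ forall t' k', a <= t' <= b -> K k' -> F t' k' <= F t k.
Proof.
  intros Hab Hmax Huc.
  assert (Hch : forall t, exists k, a <= t <= b -> K k /\ forall k', K k' -> F t k' <= F t k).
  { intros t. destruct (classic (a <= t <= b)) as [Ht|Ht].
    - destruct (Hmax t Ht) as [k Hk]. exists k. auto.
    - destruct (Hmax a (conj (Rle_refl a) Hab)) as [k Hk]. exists k. intros; contradiction. }
  set (kf := fun t => proj1_sig (constructive_indefinite_description _ (Hch t))).
  assert (Hkf : forall t, a <= t <= b -> K (kf t) /\ forall k', K k' -> F t k' <= F t (kf t)).
  { intros t Ht. exact (proj2_sig (constructive_indefinite_description _ (Hch t)) Ht). }
  (* the value function t |-> max_k F t k is continuous, so it attains its maximum *)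
  destruct (seg_cont_max_attained (fun t => F t (kf t)) a b Hab) as [z [Hz Hzm]].
  { intros z Hz eps He. destruct (Huc eps He) as [d [Hd Hu]]. exists d. split; [exact Hd|].
    intros w Hw Hwz.
    destruct (Hkf w Hw) as [Kw Mw]. destruct (Hkf z Hz) as [Kz Mz].
    pose proof (Mw (kf z) Kz). pose proof (Mz (kf w) Kw).
    assert (E1 := Hu w z (kf z) Hw Hz Hwz Kz).
    rewrite Rabs_minus_sym in Hwz. assert (E2 := Hu z w (kf w) Hz Hw Hwz Kw).
    apply Rabs_lt_between in E1. apply Rabs_lt_between in E2. apply Rabs_def1; lra. }
  exists z, (kf z). destruct (Hkf z Hz) as [Kz Mz]. split; [exact Hz|]. split; [exact Kz|].
  intros t' k' Ht' Kk'. destruct (Hkf t' Ht') as [Kt Mt].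
  pose proof (Mt k' Kk'). pose proof (Hzm t' Ht'). lra.
Qed.

Lemma ucont_rect_max_attained (F : R -> R -> R) a b c d : a <= b -> c <= d -> ucont_rect a b c d F ->
  exists t x, a <= t <= b /\ c <= x <= d /\
    forall t' x', a <= t' <= b -> c <= x' <= d -> F t' x' <= F t x.
Proof.
  intros Hab Hcd HF. apply (max_attained_param (fun x => c <= x <= d) F a b Hab).
  - intros t Ht. apply seg_cont_max_attained; [exact Hcd|].
    intros z Hz. apply (ucont_rect_seg_cont_x a b c d); auto.
  - intros eps He. destruct (HF eps He) as [dl [Hdl Hw]]. exists dl. split; [exact Hdl|].
    intros t t' k Ht Ht' Htt Hk. apply Hw; auto. rewrite Rminus_eq_0, Rabs_R0. exact Hdl.
Qed.

Lemma ucont_rect_bounded a b c d f : a <= b -> c <= d -> ucont_rect a b c d f ->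
  exists B, forall t x, a <= t <= b -> c <= x <= d -> Rabs (f t x) <= B.
Proof.
  intros Hab Hcd Hf.
  destruct (ucont_rect_max_attained (fun t x => Rabs (f t x)) a b c d Hab Hcd) as [t [x [_ [_ Hm]]]].
  { intros eps He. destruct (Hf eps He) as [dl [Hdl Hw]]. exists dl. split; [exact Hdl|]. intros.
    eapply Rle_lt_trans; [apply Rabs_triang_inv2 | auto]. }
  exists (Rabs (f t x)). exact Hm.
Qed.

Lemma Rmin_dist_le x y x' y' : Rabs (Rmin x y - Rmin x' y') <= Rmax (Rabs (x - x')) (Rabs (y - y')).
Proof.
  pose proof (Rmax_l (Rabs (x - x')) (Rabs (y - y'))). pose proof (Rmax_r (Rabs (x - x')) (Rabs (y - y'))).
  revert H H0. generalize (Rmax (Rabs (x - x')) (Rabs (y - y'))). intros m H1 H2.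
  unfold Rmin in *. repeat destruct Rle_dec; unfold Rabs in *; repeat destruct Rcase_abs; lra.
Qed.

Lemma ucont_rect_doubling_max_attained a b c d g : a <= b -> c <= d -> ucont_rect a b c d g ->
  exists t x y, a <= t <= b /\ (c <= y <= x /\ x <= d) /\
    forall t' x' y', a <= t' <= b -> c <= y' <= x' /\ x' <= d ->
      g t' x' - g t' y' <= g t x - g t y.
Proof.
  intros Hab Hcd Hg.
  (* maximise over the square, folding it onto the triangle y <= x by y |-> min x y *)
  set (F := fun t (k : R * R) => g t (fst k) - g t (Rmin (fst k) (snd k))).
  assert (Hmin : forall x y, c <= x <= d -> c <= y <= d -> c <= Rmin x y <= d)
    by (intros; unfold Rmin; destruct Rle_dec; lra).
  destruct (max_attained_param (fun k => c <= fst k <= d /\ c <= snd k <= d) F a b Hab)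
    as [t [[x y] [Ht [[Hx Hy] Hmax]]]].
  - intros t Ht.
    destruct (ucont_rect_max_attained (fun x y => F t (x, y)) c d c d Hcd Hcd) as [x [y [Hx [Hy Hm]]]].
    + intros eps He. destruct (Hg (eps / 2)) as [dl [Hdl Hw]]; [lra|].
      exists dl. split; [exact Hdl|]. intros x y x' y' Hx Hy Hx' Hy' Hxx Hyy. unfold F; simpl.
      assert (Rabs (Rmin x y - Rmin x' y') < dl)
        by (eapply Rle_lt_trans; [apply Rmin_dist_le | unfold Rmax; destruct Rle_dec; lra]).
      assert (E1 := Hw t x t x' Ht Hx Ht Hx' ltac:(rewrite Rminus_eq_0, Rabs_R0; lra) Hxx).
      assert (E2 := Hw t (Rmin x y) t (Rmin x' y') Ht (Hmin x y Hx Hy) Ht (Hmin x' y' Hx' Hy')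
                    ltac:(rewrite Rminus_eq_0, Rabs_R0; lra) ltac:(assumption)).
      apply Rabs_lt_between in E1. apply Rabs_lt_between in E2. apply Rabs_def1; lra.
    + exists (x, y). split; [split; assumption|]. intros [x' y'] [Hx' Hy']. exact (Hm x' y' Hx' Hy').
  - intros eps He. destruct (Hg (eps / 2)) as [dl [Hdl Hw]]; [lra|].
    exists dl. split; [exact Hdl|]. intros t t' [x y] Ht Ht' Htt [Hx Hy]. unfold F; simpl.
    assert (E1 := Hw t x t' x Ht Hx Ht' Hx Htt ltac:(rewrite Rminus_eq_0, Rabs_R0; lra)).
    assert (E2 := Hw t (Rmin x y) t' (Rmin x y) Ht (Hmin x y Hx Hy) Ht' (Hmin x y Hx Hy) Htt
                  ltac:(rewrite Rminus_eq_0, Rabs_R0; lra)).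
    apply Rabs_lt_between in E1. apply Rabs_lt_between in E2. apply Rabs_def1; lra.
  - simpl in *. exists t, x, (Rmin x y). split; [exact Ht|].
    split; [unfold Rmin; destruct Rle_dec; lra|].
    intros t' x' y' Ht' Hxy'. specialize (Hmax t' (x', y') Ht' ltac:(simpl; lra)). unfold F in Hmax; simpl in Hmax.
    rewrite (Rmin_right x' y') in Hmax by lra. exact Hmax.
Qed.

Lemma cont_on_rect_ucont T L f : 0 <= T -> 0 <= L -> cont_on_rect T L f -> ucont_rect 0 T 0 L f.
Proof.
  intros HT HL Hc. apply ucont_rect_clamp; [exact HT | exact HL |].
  intros t x [e He].
  assert (Hin : in_rect T L (clamp 0 T t) (clamp 0 L x)) by (split; apply clamp_in; assumption).
  destruct (Hc _ _ Hin (fun z => ball (f (clamp 0 T t) (clamp 0 L x)) e z) (locally_ball _ (mkposreal e He)))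
    as [[d Hd] Hw].
  exists (mkposreal d Hd). intros u v Hu Hv. simpl in *.
  pose proof (clamp_lip 0 T u t HT). pose proof (clamp_lip 0 L v x HL).
  apply (Hw (clamp 0 T u, clamp 0 L v)).
  - split; [change (Rabs (clamp 0 T u - clamp 0 T t) < d) | change (Rabs (clamp 0 L v - clamp 0 L x) < d)]; lra.
  - split; apply clamp_in; assumption.
Qed.

(** * Maximum principles *)

Lemma max_principle_backward (L t0 t1 : R) (W Wt Wx Wxx : R -> R -> R) :
  t0 < t1 -> 0 < L ->
  ucont_rect t0 t1 0 L W -> ucont_rect t0 t1 0 L Wx ->
  (forall s x, t0 <= s < t1 -> 0 < x < L ->
     is_derive (fun s => W s x) s (Wt s x) /\ is_derive (W s) x (Wx s x) /\ is_derive (Wx s) x (Wxx s x)) ->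
  (forall x, 0 <= x <= L -> W t1 x <= 0) ->
  (forall s, t0 <= s < t1 -> 0 < W s 0 -> 0 < Wx s 0) ->
  (forall s, t0 <= s < t1 -> 0 < W s L -> Wx s L < 0) ->
  (forall s x, t0 <= s < t1 -> 0 < x < L -> 0 < W s x -> Wx s x = 0 -> Wxx s x <= 0 -> 0 < Wt s x) ->
  forall s x, t0 <= s <= t1 -> 0 <= x <= L -> W s x <= 0.
Proof.
  intros Ht HL HW HWx Hder Hterm Hb0 HbL Hint s x Hs Hx.
  destruct (ucont_rect_max_attained W t0 t1 0 L ltac:(lra) ltac:(lra) HW) as [ts [xs [Hts [Hxs Hmax]]]].
  destruct (Rle_or_lt (W ts xs) 0) as [Hle|Hpos]; [specialize (Hmax s x Hs Hx); lra|]. exfalso.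
  destruct (Req_dec ts t1) as [->|Hne]; [specialize (Hterm xs Hxs); lra|].
  assert (Hts' : t0 <= ts < t1) by lra.
  assert (Hslice : forall z, 0 <= z <= L -> seg_cont 0 L (W ts) z)
    by (intros; apply (ucont_rect_seg_cont_x t0 t1 0 L); auto; lra).
  assert (Hdx : forall z, 0 < z < L -> is_derive (W ts) z (Wx ts z)) by (intros; apply Hder; auto).
  destruct (Req_dec xs 0) as [->|H0].
  { destruct (seg_not_max_left (W ts) (Wx ts) 0 L HL Hslice Hdx) as [y [Hy Hgt]].
    - apply (ucont_rect_seg_cont_x t0 t1 0 L); auto; lra.
    - apply Hb0; auto.
    - specialize (Hmax ts y ltac:(lra) ltac:(lra)). lra. }
  destruct (Req_dec xs L) as [->|HL'].
  { destruct (seg_not_max_right (W ts) (Wx ts) 0 L HL Hslice Hdx) as [y [Hy Hgt]].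
    - apply (ucont_rect_seg_cont_x t0 t1 0 L); auto; lra.
    - apply HbL; auto.
    - specialize (Hmax ts y ltac:(lra) ltac:(lra)). lra. }
  assert (Hxs' : 0 < xs < L) by lra.
  destruct (Hder ts xs Hts' Hxs') as [Dt [_ Dxx]].
  destruct (interior_max_derive (W ts) (Wx ts) (Wxx ts xs) 0 L xs Hxs' Hdx Dxx) as [Hx0 Hxx].
  { intros y Hy. apply Hmax; lra. }
  destruct (exists_gt_right_of_derive_pos _ ts _ Dt (Hint ts xs Hts' Hxs' Hpos Hx0 Hxx) (t1 - ts) ltac:(lra))
    as [s' [Hs' Hgt]].
  specialize (Hmax s' xs ltac:(lra) ltac:(lra)). lra.
Qed.

Lemma is_derive_reflect (f : R -> R) s d : is_derive f (- s) d -> is_derive (fun s => f (- s)) s (- d).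
Proof.
  intros Hf. replace (- d) with (scal (-1) d) by (unfold scal; simpl; unfold mult; simpl; ring).
  apply (is_derive_comp f Ropp s d (-1) Hf).
  change (is_derive (fun x => - x) s (-1)). auto_derive; [exact I | ring].
Qed.

Lemma max_principle_forward (L t1 : R) (W Wt Wx Wxx : R -> R -> R) :
  0 < t1 -> 0 < L ->
  ucont_rect 0 t1 0 L W -> ucont_rect 0 t1 0 L Wx ->
  (forall s x, 0 < s <= t1 -> 0 < x < L ->
     is_derive (fun s => W s x) s (Wt s x) /\ is_derive (W s) x (Wx s x) /\ is_derive (Wx s) x (Wxx s x)) ->
  (forall x, 0 <= x <= L -> W 0 x <= 0) ->
  (forall s, 0 < s <= t1 -> 0 < W s 0 -> 0 < Wx s 0) ->
  (forall s, 0 < s <= t1 -> 0 < W s L -> Wx s L < 0) ->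
  (forall s x, 0 < s <= t1 -> 0 < x < L -> 0 < W s x -> Wx s x = 0 -> Wxx s x <= 0 -> Wt s x < 0) ->
  forall s x, 0 <= s <= t1 -> 0 <= x <= L -> W s x <= 0.
Proof.
  intros Ht HL HW HWx Hder Hinit Hb0 HbL Hint s x Hs Hx.
  replace s with (- - s) by ring.
  apply (max_principle_backward L (- t1) 0 (fun s x => W (- s) x) (fun s x => - Wt (- s) x)
           (fun s x => Wx (- s) x) (fun s x => Wxx (- s) x)); try lra.
  - pose proof (ucont_rect_time_reversal _ _ _ _ _ HW) as H. rewrite Ropp_0 in H. exact H.
  - pose proof (ucont_rect_time_reversal _ _ _ _ _ HWx) as H. rewrite Ropp_0 in H. exact H.
  - intros s' x' Hs' Hx'. destruct (Hder (- s') x' ltac:(lra) Hx') as [Dt [Dx Dxx]].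
    split; [|split]; [exact (is_derive_reflect (fun s => W s x') s' _ Dt) | exact Dx | exact Dxx].
  - intros x' Hx'. rewrite Ropp_0. auto.
  - intros s' Hs' Hpos. apply Hb0; auto; lra.
  - intros s' Hs' Hpos. apply HbL; auto; lra.
  - intros s' x' Hs' Hx' H1 H2 H3. specialize (Hint (- s') x' ltac:(lra) Hx' H1 H2 H3). lra.
Qed.

(** * The Hamilton-Jacobi-Bellman equation *)

Record c12_neumann (L T : R) (u ut ux uxx : R -> R -> R) : Prop := {
  c12_ucont : ucont_rect 0 T 0 L u;
  c12_ucont_x : ucont_rect 0 T 0 L ux;
  c12_derive : forall t x, 0 < t < T -> 0 < x < L ->
    is_derive (fun s => u s x) t (ut t x) /\ is_derive (u t) x (ux t x) /\ is_derive (ux t) x (uxx t x);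
  c12_bc : forall t, 0 <= t <= T -> ux t 0 = 0 /\ ux t L = 0 }.

Definition hjb_solution (L T r sigma : R) (H : R -> R -> R) (u ut ux uxx : R -> R -> R) : Prop :=
  c12_neumann L T u ut ux uxx /\
  forall t x, 0 < t < T -> 0 < x < L -> ut t x + sigma ^ 2 / 2 * uxx t x - r * u t x + H t (ux t x) = 0.

Lemma c12_neumann_opp L T u ut ux uxx : 0 <= T -> 0 <= L -> c12_neumann L T u ut ux uxx ->
  c12_neumann L T (fun t x => - u t x) (fun t x => - ut t x) (fun t x => - ux t x) (fun t x => - uxx t x).
Proof.
  intros HT HL [Hu Hux Hder Hbc]. split.
  - apply ucont_rect_opp; auto.
  - apply ucont_rect_opp; auto.
  - intros t x Ht Hx. destruct (Hder t x Ht Hx) as [Dt [Dx Dxx]].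
    split; [|split]; derive_from_hyps.
  - intros t Ht. destruct (Hbc t Ht) as [H0 H1]. rewrite H0, H1. split; ring.
Qed.

Lemma hjb_solution_opp L T r sigma H u ut ux uxx : 0 <= T -> 0 <= L ->
  hjb_solution L T r sigma H u ut ux uxx ->
  hjb_solution L T r sigma (fun t p => - H t (- p))
    (fun t x => - u t x) (fun t x => - ut t x) (fun t x => - ux t x) (fun t x => - uxx t x).
Proof.
  intros HT HL [Hc Heq]. split; [apply c12_neumann_opp; auto|].
  intros t x Ht Hx. rewrite Ropp_involutive. specialize (Heq t x Ht Hx). lra.
Qed.

Lemma c12_neumann_barrier_above L T u ut ux uxx t0 s x0 c0 A B :
  c12_neumann L T u ut ux uxx -> 0 < t0 < s -> s <= T -> 0 < x0 < L -> 0 < A ->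
  (forall x, 0 <= x <= L -> u s x <= c0 + A * (x - x0) ^ 2) ->
  (forall tau x, t0 <= tau < s -> 0 < x < L -> uxx tau x <= 2 * A ->
     c0 + A * (x - x0) ^ 2 + B * (s - tau) < u tau x -> 0 < ut tau x + B) ->
  forall tau x, t0 <= tau <= s -> 0 <= x <= L -> u tau x <= c0 + A * (x - x0) ^ 2 + B * (s - tau).
Proof.
  intros [Hu Hux Hder Hbc] Ht0 Hs Hx0 HA Hterm Hsuper tau x Htau Hx.
  assert (HL : 0 < L) by lra.
  cut (u tau x - (c0 + A * (x - x0) ^ 2 + B * (s - tau)) <= 0); [lra|].
  apply (max_principle_backward L t0 s (fun tau x => u tau x - (c0 + A * (x - x0) ^ 2 + B * (s - tau)))
     (fun tau x => ut tau x + B) (fun tau x => ux tau x - 2 * A * (x - x0)) (fun tau x => uxx tau x - 2 * A));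
    auto; try lra.
  - apply ucont_rect_minus; try lra; [apply (ucont_rect_sub 0 T 0 L); auto; lra|].
    apply ucont_rect_plus; try lra; [apply ucont_rect_fun_x | apply ucont_rect_fun_t];
      intros; auto_derive; auto.
  - apply ucont_rect_minus; try lra; [apply (ucont_rect_sub 0 T 0 L); auto; lra|].
    apply ucont_rect_fun_x. intros; auto_derive; auto.
  - intros s' x' Hs' Hx'. destruct (Hder s' x' ltac:(lra) Hx') as [Dt [Dx Dxx]].
    split; [|split]; derive_from_hyps.
  - intros x' Hx'. specialize (Hterm x' Hx'). lra.
  - intros s' Hs' _. rewrite (proj1 (Hbc s' ltac:(lra))).
    assert (0 < A * x0) by (apply Rmult_lt_0_compat; lra). lra.
  - intros s' Hs' _. rewrite (proj2 (Hbc s' ltac:(lra))).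
    assert (0 < A * (L - x0)) by (apply Rmult_lt_0_compat; lra). lra.
  - intros s' x' Hs' Hx' Hpos Hwx Hwxx. apply Hsuper; auto; lra.
Qed.

Lemma c12_neumann_ux_bound L T u ut ux uxx M : 0 < L -> 0 < T -> c12_neumann L T u ut ux uxx ->
  (forall t x y, 0 <= t <= T -> 0 <= x <= L -> 0 <= y <= L -> Rabs (u t x - u t y) <= M * Rabs (x - y)) ->
  forall t x, 0 <= t <= T -> 0 <= x <= L -> Rabs (ux t x) <= M.
Proof.
  intros HL HT [Hu Hux Hder Hbc] Hlip.
  apply (ucont_rect_abs_le_of_interior 0 T 0 L ux M HT HL Hux).
  intros t x Ht Hx. destruct (Hder t x Ht Hx) as [_ [Dx _]].
  apply (derive_abs_le_of_lipschitz (u t) x (ux t x) M Dx).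
  exists (Rmin x (L - x)). split; [apply Rmin_glb_lt; lra|].
  intros h Hh0 Hh. pose proof (Rmin_l x (L - x)). pose proof (Rmin_r x (L - x)).
  apply Rabs_lt_between in Hh. replace h with ((x + h) - x) at 2 by ring. apply Hlip; lra.
Qed.

(* on the boundary, the Neumann condition gives the doubled function a strict ascent direction *)
Lemma c12_neumann_doubling_max_interior L T u ut ux uxx M ts xs ys :
  c12_neumann L T u ut ux uxx -> 0 < M -> 0 < ts < T -> 0 <= ys < xs -> xs <= L ->
  (forall x y, 0 <= y <= x /\ x <= L -> u ts x - u ts y - M * (x - y) <= u ts xs - u ts ys - M * (xs - ys)) ->
  0 < ys /\ xs < L.
Proof.
  intros [Hu Hux Hder Hbc] HM Hts Hys Hxs Hmax.
  assert (Hslice : forall f, ucont_rect 0 T 0 L f -> forall a b z, 0 <= a -> b <= L -> a <= z <= b ->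
            seg_cont a b (f ts) z)
    by (intros f Hf a b z Ha Hb Hz; apply (seg_cont_sub 0 L); try lra;
        apply (ucont_rect_seg_cont_x 0 T 0 L); auto; lra).
  split.
  - destruct (Req_dec ys 0) as [E0|E0]; [|lra]. exfalso.
    destruct (seg_not_max_left (fun z => u ts xs - u ts z - M * (xs - z)) (fun z => M - ux ts z) 0 xs)
      as [z [Hz Hgt]]; try lra.
    + intros z Hz. seg_cont_auto. apply Hslice; auto; lra.
    + intros z Hz. destruct (Hder ts z Hts ltac:(lra)) as [_ [Dx _]]. derive_from_hyps.
    + seg_cont_auto. apply Hslice; auto; lra.
    + rewrite (proj1 (Hbc ts ltac:(lra))). lra.
    + specialize (Hmax xs z ltac:(lra)). rewrite E0 in Hmax. lra.
  - destruct (Req_dec xs L) as [EL|EL]; [|lra]. exfalso.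
    destruct (seg_not_max_right (fun z => u ts z - u ts ys - M * (z - ys)) (fun z => ux ts z - M) ys L)
      as [z [Hz Hgt]]; try lra.
    + intros z Hz. seg_cont_auto. apply Hslice; auto; lra.
    + intros z Hz. destruct (Hder ts z Hts ltac:(lra)) as [_ [Dx _]]. derive_from_hyps.
    + seg_cont_auto. apply Hslice; auto; lra.
    + rewrite (proj2 (Hbc ts ltac:(lra))). lra.
    + specialize (Hmax z ys ltac:(lra)). rewrite EL in Hmax. lra.
Qed.

Section HJBOneSided.

Variables (L T r sigma : R) (H : R -> R -> R) (u ut ux uxx : R -> R -> R).
Hypotheses (HL : 0 < L) (HT : 0 < T) (Hr : 0 < r) (Hsig : 0 < sigma <= 1)
  (Hsol : hjb_solution L T r sigma H u ut ux uxx).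

Let Hsig2 : 0 <= sigma ^ 2 <= 1.
Proof. split; [apply pow2_ge_0 | simpl; nra]. Qed.

Lemma hjb_upper_bound K Hm : 0 <= K -> 0 <= Hm ->
  (forall x, 0 <= x <= L -> u T x <= K) ->
  (forall t x, 0 < t < T -> 0 < x < L -> H t (ux t x) <= Hm) ->
  forall t x, 0 <= t <= T -> 0 <= x <= L -> u t x <= K + L ^ 2 + (2 + Hm) * T.
Proof.
  intros HK HHm Hterm HH. destruct Hsol as [Hc Heq].
  assert (Hsq : forall x, 0 <= x <= L -> 0 <= (x - L / 2) ^ 2 <= L ^ 2)
    by (intros; split; [apply pow2_ge_0 | nra]).
  assert (Hpos : forall t x, 0 < t <= T -> 0 <= x <= L -> u t x <= K + L ^ 2 + (2 + Hm) * T).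
  { intros t x Ht Hx.
    assert (Hbar := c12_neumann_barrier_above L T u ut ux uxx (t / 2) T (L / 2) K 1 (2 + Hm) Hc).
    assert (u t x <= K + 1 * (x - L / 2) ^ 2 + (2 + Hm) * (T - t)).
    { apply Hbar; try lra.
      - intros x' Hx'. specialize (Hterm x' Hx'). specialize (Hsq x' Hx'). lra.
      - intros tau x' Htau Hx' Huxx Habove. specialize (Heq tau x' ltac:(lra) Hx').
        specialize (HH tau x' ltac:(lra) Hx'). specialize (Hsq x' ltac:(lra)).
        assert (sigma ^ 2 / 2 * uxx tau x' <= sigma ^ 2 / 2 * 2) by (apply Rmult_le_compat_l; lra).
        assert (0 < r * u tau x') by (apply Rmult_lt_0_compat; nra).
        lra. }
    specialize (Hsq x Hx). nra. }
  intros t x Ht Hx. destruct (Req_dec t 0) as [->|Ht0]; [|apply Hpos; lra].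
  apply (seg_cont_le_of_interior (fun s => u s x) 0 T); try lra.
  - apply (ucont_rect_seg_cont_t 0 T 0 L); [apply Hc | lra | exact Hx].
  - intros s Hs. apply Hpos; lra.
Qed.

Lemma hjb_doubling_interior_max M ts xs ys : 0 <= M -> 0 < ts < T -> 0 < ys < xs -> xs < L ->
  0 < u ts xs - u ts ys - M * (xs - ys) ->
  (forall x y, 0 <= y <= x /\ x <= L -> u ts x - u ts y - M * (x - y) <= u ts xs - u ts ys - M * (xs - ys)) ->
  0 < ut ts xs - ut ts ys.
Proof.
  intros HM Hts Hys Hxs Hpos Hmax. destruct Hsol as [[_ _ Hder _] Heq].
  destruct (Hder ts xs Hts ltac:(lra)) as [_ [_ Dxx]]. destruct (Hder ts ys Hts ltac:(lra)) as [_ [_ Dyy]].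
  destruct (interior_max_derive (fun z => u ts z - u ts ys - M * (z - ys)) (fun z => ux ts z - M)
              (uxx ts xs) ys L xs) as [Ex Exx]; try lra.
  { intros z Hz. destruct (Hder ts z Hts ltac:(lra)) as [_ [Dx _]]. derive_from_hyps. }
  { derive_from_hyps. }
  { intros z Hz. apply Hmax. lra. }
  destruct (interior_max_derive (fun z => u ts xs - u ts z - M * (xs - z)) (fun z => M - ux ts z)
              (- uxx ts ys) 0 xs ys) as [Ey Eyy]; try lra.
  { intros z Hz. destruct (Hder ts z Hts ltac:(lra)) as [_ [Dx _]]. derive_from_hyps. }
  { derive_from_hyps. }
  { intros z Hz. apply Hmax. lra. }
  (* equal gradients at the two points make the Hamiltonians cancel *)
  assert (Hgrad : ux ts xs = ux ts ys) by lra.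
  pose proof (Heq ts xs Hts ltac:(lra)) as Eqx. pose proof (Heq ts ys Hts ltac:(lra)) as Eqy.
  rewrite Hgrad in Eqx.
  assert (sigma ^ 2 / 2 * (uxx ts xs - uxx ts ys) <= 0)
    by (apply Rmult_le_0_l; [pose proof Hsig2; lra | lra]).
  assert (0 < r * (u ts xs - u ts ys)) by (apply Rmult_lt_0_compat; nra).
  lra.
Qed.

Lemma hjb_lipschitz_upper M : 0 < M ->
  (forall x y, 0 <= y <= x /\ x <= L -> u T x - u T y <= M * (x - y)) ->
  forall t x y, 0 < t <= T -> 0 <= y <= x /\ x <= L -> u t x - u t y <= M * (x - y).
Proof.
  intros HM Hterm t x y Ht Hxy. destruct Hsol as [Hc _]. pose proof (c12_derive _ _ _ _ _ _ Hc) as Hder.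
  set (g := fun s z => u s z - M * z).
  assert (Hg : ucont_rect (t / 2) T 0 L g).
  { apply ucont_rect_minus; try lra; [apply (ucont_rect_sub 0 T 0 L); try apply Hc; lra|].
    apply ucont_rect_fun_x. intros; auto_derive; auto. }
  destruct (ucont_rect_doubling_max_attained (t / 2) T 0 L g ltac:(lra) ltac:(lra) Hg)
    as [ts [xs [ys [Hts [Hxys Hmax]]]]].
  unfold g in Hmax.
  cut (u t x - M * x - (u t y - M * y) <= 0); [lra|].
  eapply Rle_trans; [apply Hmax; lra|].
  destruct (Rle_or_lt (u ts xs - M * xs - (u ts ys - M * ys)) 0) as [Hle|Hpos]; [exact Hle|]. exfalso.
  assert (Hyx : ys < xs) by (destruct (Req_dec ys xs) as [E|E]; [rewrite E in Hpos|]; lra).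
  assert (Hts' : 0 < ts < T).
  { split; [lra|]. destruct (Req_dec ts T) as [E|E]; [|lra].
    rewrite E in Hpos. specialize (Hterm xs ys Hxys). lra. }
  assert (Hslice : forall x' y', 0 <= y' <= x' /\ x' <= L ->
            u ts x' - u ts y' - M * (x' - y') <= u ts xs - u ts ys - M * (xs - ys))
    by (intros x' y' Hxy'; specialize (Hmax ts x' y' ltac:(lra) Hxy'); lra).
  destruct (c12_neumann_doubling_max_interior L T u ut ux uxx M ts xs ys Hc HM Hts' ltac:(lra) ltac:(lra) Hslice)
    as [Hys Hxs].
  assert (Hrise := hjb_doubling_interior_max M ts xs ys ltac:(lra) Hts' ltac:(lra) Hxs ltac:(lra) Hslice).
  destruct (Hder ts xs Hts' ltac:(lra)) as [Dtx _]. destruct (Hder ts ys Hts' ltac:(lra)) as [Dty _].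
  assert (Dt : is_derive (fun s => u s xs - M * xs - (u s ys - M * ys)) ts (ut ts xs - ut ts ys))
    by derive_from_hyps.
  destruct (exists_gt_right_of_derive_pos _ ts _ Dt Hrise (T - ts) ltac:(lra)) as [s' [Hs' Hgt]].
  specialize (Hmax s' xs ys ltac:(lra) ltac:(lra)). lra.
Qed.

Lemma hjb_time_holder_upper M U Hm : 0 < M -> 0 <= Hm ->
  (forall t x y, 0 <= t <= T -> 0 <= x <= L -> 0 <= y <= L -> Rabs (u t x - u t y) <= M * Rabs (x - y)) ->
  (forall t x, 0 <= t <= T -> 0 <= x <= L -> Rabs (u t x) <= U) ->
  (forall t x, 0 < t < T -> 0 < x < L -> H t (ux t x) <= Hm) ->
  forall t s x0, 0 < t < s -> s <= T -> 0 < x0 < L ->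
  u t x0 - u s x0 <= (1 + M ^ 2 / 4 + (r * U + Hm + 1) * sqrt T) * sqrt (s - t).
Proof.
  intros HM HHm Hlip Hbd HH t s x0 Hts HsT Hx0. destruct Hsol as [Hc Heq].
  set (ep := sqrt (s - t)).
  assert (Hep : 0 < ep) by (apply sqrt_lt_R0; lra).
  assert (Hep2 : ep * ep = s - t) by (apply sqrt_sqrt; lra).
  assert (HepT : ep <= sqrt T) by (apply sqrt_le_1; lra).
  assert (HU : 0 <= U) by (specialize (Hbd t x0 ltac:(lra) ltac:(lra)); pose proof (Rabs_pos (u t x0)); lra).
  (* a barrier of width ep: A (x - x0)^2 dominates M |x - x0| up to an error ep *)
  set (A := M ^ 2 / (4 * ep)).
  assert (HA : 0 < A) by (unfold A; apply Rdiv_lt_0_compat; [apply pow_lt | ]; lra).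
  set (B := A + r * U + Hm + 1).
  assert (Hyoung : forall z, M * Rabs z <= ep + A * z ^ 2) by (intros; apply Rmult_abs_le_young; exact Hep).
  assert (Hbar : u t x0 <= (u s x0 + ep) + A * (x0 - x0) ^ 2 + B * (s - t)).
  { apply (c12_neumann_barrier_above L T u ut ux uxx t s x0 (u s x0 + ep) A B Hc); try lra.
    - intros x Hx. specialize (Hlip s x x0 ltac:(lra) Hx ltac:(lra)). specialize (Hyoung (x - x0)).
      apply Rabs_le_between in Hlip. lra.
    - intros tau x Htau Hx Huxx _. specialize (Heq tau x ltac:(lra) Hx).
      specialize (HH tau x ltac:(lra) Hx). specialize (Hbd tau x ltac:(lra) ltac:(lra)).
      apply Rabs_le_between in Hbd.
      assert (sigma ^ 2 / 2 * uxx tau x <= sigma ^ 2 / 2 * (2 * A))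
        by (apply Rmult_le_compat_l; [pose proof Hsig2|]; lra).
      assert (sigma ^ 2 * A <= 1 * A) by (apply Rmult_le_compat_r; [|pose proof Hsig2]; lra).
      assert (r * (- U) <= r * u tau x) by (apply Rmult_le_compat_l; lra).
      unfold B. lra. }
  assert (HB : B * (s - t) <= (M ^ 2 / 4 + (r * U + Hm + 1) * sqrt T) * ep).
  { rewrite <- Hep2. unfold B, A.
    replace ((M ^ 2 / (4 * ep) + r * U + Hm + 1) * (ep * ep))
      with (M ^ 2 / 4 * ep + (r * U + Hm + 1) * ep * ep) by (field; lra).
    assert (0 <= r * U) by (apply Rmult_le_pos; lra).
    assert ((r * U + Hm + 1) * ep * ep <= (r * U + Hm + 1) * sqrt T * ep)
      by (apply Rmult_le_compat_r; [lra | apply Rmult_le_compat_l; lra]).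
    lra. }
  replace (x0 - x0) with 0 in Hbar by ring. fold ep. lra.
Qed.

End HJBOneSided.

Section HJB.

Variables (L T r sigma : R) (H : R -> R -> R) (u ut ux uxx : R -> R -> R).
Hypotheses (HL : 0 < L) (HT : 0 < T) (Hr : 0 < r) (Hsig : 0 < sigma <= 1)
  (Hsol : hjb_solution L T r sigma H u ut ux uxx).

Let Hsol_opp := hjb_solution_opp L T r sigma H u ut ux uxx ltac:(lra) ltac:(lra) Hsol.

Let Hu : ucont_rect 0 T 0 L u.
Proof. apply Hsol. Qed.

Lemma hjb_sup_bound K Hm : 0 <= K -> 0 <= Hm ->
  (forall x, 0 <= x <= L -> 0 <= u T x <= K) ->
  (forall t x, 0 < t < T -> 0 < x < L -> 0 <= H t (ux t x) <= Hm) ->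
  forall t x, 0 <= t <= T -> 0 <= x <= L -> Rabs (u t x) <= K + L ^ 2 + (2 + Hm) * T.
Proof.
  intros HK HHm Hterm HH t x Ht Hx. apply Rabs_le. split.
  - assert (Hlow := hjb_upper_bound L T r sigma _ _ _ _ _ HL HT Hr Hsig Hsol_opp 0 0 ltac:(lra) ltac:(lra)).
    assert (- u t x <= 0 + L ^ 2 + (2 + 0) * T).
    { apply Hlow; auto.
      - intros x' Hx'. specialize (Hterm x' Hx'). lra.
      - intros t' x' Ht' Hx'. rewrite Ropp_involutive. specialize (HH t' x' Ht' Hx'). lra. }
    assert (0 <= Hm * T) by (apply Rmult_le_pos; lra). lra.
  - apply (hjb_upper_bound L T r sigma H u ut ux uxx); auto.
    + intros x' Hx'. apply Hterm. exact Hx'.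
    + intros t' x' Ht' Hx'. apply HH; auto.
Qed.

Lemma hjb_lipschitz M : 0 < M ->
  (forall x y, 0 <= x <= L -> 0 <= y <= L -> Rabs (u T x - u T y) <= M * Rabs (x - y)) ->
  forall t x y, 0 <= t <= T -> 0 <= x <= L -> 0 <= y <= L -> Rabs (u t x - u t y) <= M * Rabs (x - y).
Proof.
  intros HM Hterm.
  assert (Hordered : forall t x y, 0 < t <= T -> 0 <= y <= x /\ x <= L -> Rabs (u t x - u t y) <= M * (x - y)).
  { intros t x y Ht Hxy. apply Rabs_le. split.
    - cut (- u t x - - u t y <= M * (x - y)); [lra|].
      apply (hjb_lipschitz_upper L T r sigma _ _ _ _ _ HL HT Hr Hsig Hsol_opp M HM); auto.
      intros x' y' Hxy'. specialize (Hterm x' y' ltac:(lra) ltac:(lra)).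
      rewrite Rabs_pos_eq with (x := x' - y') in Hterm by lra. apply Rabs_le_between in Hterm. lra.
    - apply (hjb_lipschitz_upper L T r sigma H u ut ux uxx HL HT Hr Hsig Hsol M HM); auto.
      intros x' y' Hxy'. specialize (Hterm x' y' ltac:(lra) ltac:(lra)).
      rewrite Rabs_pos_eq with (x := x' - y') in Hterm by lra. apply Rabs_le_between in Hterm. lra. }
  assert (Hpos : forall t x y, 0 < t <= T -> 0 <= x <= L -> 0 <= y <= L -> Rabs (u t x - u t y) <= M * Rabs (x - y)).
  { intros t x y Ht Hx Hy. destruct (Rle_or_lt y x) as [Hyx|Hxy].
    - rewrite (Rabs_pos_eq (x - y)) by lra. apply Hordered; lra.
    - rewrite Rabs_minus_sym, (Rabs_minus_sym x), (Rabs_pos_eq (y - x)) by lra. apply Hordered; lra. }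
  intros t x y Ht Hx Hy. destruct (Req_dec t 0) as [->|Ht0]; [|apply Hpos; lra].
  apply (seg_cont_abs_le_of_interior (fun s => u s x - u s y) 0 T); try lra.
  - apply seg_cont_minus; try lra; apply (ucont_rect_seg_cont_t 0 T 0 L); auto; lra.
  - intros s Hs. apply Hpos; lra.
Qed.

Lemma hjb_time_holder M U Hm : 0 < M -> 0 <= Hm ->
  (forall t x y, 0 <= t <= T -> 0 <= x <= L -> 0 <= y <= L -> Rabs (u t x - u t y) <= M * Rabs (x - y)) ->
  (forall t x, 0 <= t <= T -> 0 <= x <= L -> Rabs (u t x) <= U) ->
  (forall t x, 0 < t < T -> 0 < x < L -> 0 <= H t (ux t x) <= Hm) ->
  forall t s x, 0 <= t <= T -> 0 <= s <= T -> 0 <= x <= L ->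
  Rabs (u t x - u s x) <= (1 + M ^ 2 / 4 + (r * U + Hm + 1) * sqrt T) * sqrt (Rabs (t - s)).
Proof.
  intros HM HHm Hlip Hbd HH.
  set (C := 1 + M ^ 2 / 4 + (r * U + Hm + 1) * sqrt T).
  assert (Hinterior : forall t s x, 0 < t < s -> s <= T -> 0 < x < L -> Rabs (u t x - u s x) <= C * sqrt (s - t)).
  { intros t s x Hts HsT Hx. apply Rabs_le. split.
    - cut (- u t x - - u s x <= C * sqrt (s - t)); [lra|].
      apply (hjb_time_holder_upper L T r sigma _ _ _ _ _ HT Hr Hsig Hsol_opp M U Hm); auto.
      + intros t' x' y' Ht' Hx' Hy'. replace (- u t' x' - - u t' y') with (- (u t' x' - u t' y')) by ring.
        rewrite Rabs_Ropp. auto.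
      + intros t' x' Ht' Hx'. rewrite Rabs_Ropp. auto.
      + intros t' x' Ht' Hx'. rewrite Ropp_involutive. specialize (HH t' x' Ht' Hx'). lra.
    - apply (hjb_time_holder_upper L T r sigma H u ut ux uxx HT Hr Hsig Hsol M U Hm); auto.
      intros t' x' Ht' Hx'. apply HH; auto. }
  assert (Hordered : forall t s x, 0 <= t < s -> s <= T -> 0 <= x <= L -> Rabs (u t x - u s x) <= C * sqrt (s - t)).
  { intros t s x Hts HsT Hx.
    assert (Hpos : forall t', 0 < t' < s -> Rabs (u t' x - u s x) <= C * sqrt (s - t')).
    { intros t' Ht'. apply (seg_cont_abs_le_of_interior (fun z => u t' z - u s z) 0 L); try lra.
      - apply seg_cont_minus; try lra; apply (ucont_rect_seg_cont_x 0 T 0 L); auto; lra.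
      - intros z Hz. apply Hinterior; lra. }
    destruct (Req_dec t 0) as [->|Ht0]; [|apply Hpos; lra].
    apply (seg_cont_abs_le_of_interior (fun tau => u tau x - u s x) 0 s); try lra.
    - apply seg_cont_minus; try lra; [|apply seg_cont_const].
      apply (seg_cont_sub 0 T); try lra. apply (ucont_rect_seg_cont_t 0 T 0 L); auto; lra.
    - intros z Hz. eapply Rle_trans; [apply Hpos; lra|].
      apply Rmult_le_compat_l; [|apply sqrt_le_1; lra].
      unfold C. pose proof (sqrt_pos T). pose proof (pow2_ge_0 M).
      assert (0 <= r * U) by (apply Rmult_le_pos; [lra | specialize (Hbd 0 0 ltac:(lra) ltac:(lra)); pose proof (Rabs_pos (u 0 0)); lra]).
      assert (0 <= (r * U + Hm + 1) * sqrt T) by (apply Rmult_le_pos; lra). lra. }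
  intros t s x Ht Hs Hx. destruct (Rtotal_order t s) as [Hlt|[->|Hgt]].
  - rewrite (Rabs_minus_sym t s), (Rabs_pos_eq (s - t)) by lra. apply Hordered; lra.
  - rewrite !Rminus_eq_0, Rabs_R0, sqrt_0, Rmult_0_r. lra.
  - rewrite (Rabs_pos_eq (t - s)) by lra. rewrite Rabs_minus_sym. apply Hordered; lra.
Qed.

End HJB.

(** * The Fokker-Planck equation *)

Lemma robin_flux_sign s2 Gb g q m k : 0 < s2 -> Rabs g <= Gb -> m < 0 -> s2 / 2 * q + g * m = 0 ->
  2 * Gb / s2 + 1 <= k -> q + k * m < 0.
Proof.
  intros Hs2 Hg Hm Hrobin Hk.
  assert (Hq : q = - (2 / s2) * g * m) by (apply Rmult_eq_reg_l with (s2 / 2); [field_simplify; lra | lra]).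
  assert (Hgap : 0 < k - 2 / s2 * g).
  { apply Rabs_le_between in Hg.
    assert (2 / s2 * g <= 2 * Gb / s2) by (unfold Rdiv; rewrite Rmult_assoc, (Rmult_comm (/ s2)), <- Rmult_assoc;
      apply Rmult_le_compat_r; [left; apply Rinv_0_lt_compat|]; lra).
    lra. }
  rewrite Hq. replace (- (2 / s2) * g * m + k * m) with ((k - 2 / s2 * g) * m) by ring. nra.
Qed.

Section FokkerPlanck.

Variables (L T sigma Gb Gxb : R) (m mt mx mxx G Gx : R -> R -> R).
Hypotheses (HL : 0 < L) (HT : 0 < T) (Hsig : 0 < sigma)
  (Hm_ucont : ucont_rect 0 T 0 L m) (Hmx_ucont : ucont_rect 0 T 0 L mx)
  (Hder : forall t x, 0 < t < T -> 0 < x < L ->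
     is_derive (fun s => m s x) t (mt t x) /\ is_derive (m t) x (mx t x) /\ is_derive (mx t) x (mxx t x))
  (Heq : forall t x, 0 < t < T -> 0 < x < L -> mt t x = sigma ^ 2 / 2 * mxx t x + G t x * mx t x + Gx t x * m t x)
  (HG : forall t x, 0 < t < T -> 0 <= x <= L -> Rabs (G t x) <= Gb)
  (HGx : forall t x, 0 < t < T -> 0 < x < L -> Rabs (Gx t x) <= Gxb)
  (Hrobin : forall t, 0 < t < T ->
     sigma ^ 2 / 2 * mx t 0 + G t 0 * m t 0 = 0 /\ sigma ^ 2 / 2 * mx t L + G t L * m t L = 0).

(* m is nonnegative iff the weighted function E m is; the spatial weight absorbs the drift at the
   Robin boundary and the temporal one the zeroth-order terms *)
Let be := (2 * Gb / sigma ^ 2 + 1) / L.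
Let la := sigma ^ 2 / 2 * ((be * L) ^ 2 + 2 * be) + Gb * (be * L) + Gxb + 1.
Let E t x := exp (- (la * t) - be * (x - L / 2) ^ 2).
Let p x := 2 * be * (x - L / 2).

Let Hs2 : 0 < sigma ^ 2.
Proof. apply pow_lt. exact Hsig. Qed.

Let HbeL : be * L = 2 * Gb / sigma ^ 2 + 1.
Proof. unfold be. field. lra. Qed.

Let HE : forall t x, 0 < E t x.
Proof. intros. apply exp_pos. Qed.

Let HE_t t x : is_derive (fun s => E s x) t (- la * E t x).
Proof. unfold E. auto_derive; [exact I | unify_exp_args; ring]. Qed.

Let HE_x t x : is_derive (E t) x (- p x * E t x).
Proof. unfold E, p. auto_derive; [exact I | unify_exp_args; ring]. Qed.

Let Hp_x x : is_derive p x (2 * be).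
Proof. unfold p. auto_derive; [exact I | ring]. Qed.

Let HE_ucont : ucont_rect 0 T 0 L E.
Proof.
  apply (ucont_rect_ext _ _ _ _ (fun t x => exp (- (la * t)) * exp (- (be * (x - L / 2) ^ 2)))).
  { intros t x. unfold E. rewrite <- exp_plus. f_equal; ring. }
  apply ucont_rect_mult; try lra; [apply ucont_rect_fun_t | apply ucont_rect_fun_x];
    intros; auto_derive; auto.
Qed.

Let Hmp_ucont : ucont_rect 0 T 0 L (fun t x => mx t x - p x * m t x).
Proof.
  apply ucont_rect_minus; try lra; [exact Hmx_ucont|].
  apply ucont_rect_mult; try lra; [|exact Hm_ucont]. apply ucont_rect_fun_x. intros; apply (ex_intro _ _ (Hp_x _)).
Qed.

Let Hbe : 0 < be.
Proof.
  assert (0 <= Gb) by (specialize (HG (T / 2) 0 ltac:(lra) ltac:(lra)); pose proof (Rabs_pos (G (T / 2) 0)); lra).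
  assert (0 <= 2 * Gb / sigma ^ 2) by (apply Rdiv_le_0_compat; lra).
  unfold be. apply Rdiv_lt_0_compat; lra.
Qed.

Let Hp_bound x : 0 <= x <= L -> Rabs (p x) <= be * L.
Proof. intros Hx. unfold p. apply Rabs_le. split; nra. Qed.

Let Hweighted_interior s x : 0 < s < T -> 0 < x < L -> m s x < 0 -> mx s x = p x * m s x ->
  p x * mx s x + 2 * be * m s x <= mxx s x -> 0 < mt s x - la * m s x.
Proof.
  intros Hs Hx Hneg Hmx Hmxx. rewrite (Heq s x Hs Hx), Hmx. rewrite Hmx in Hmxx.
  specialize (Hp_bound x ltac:(lra)). specialize (HG s x Hs ltac:(lra)). specialize (HGx s x Hs Hx).
  set (k := sigma ^ 2 / 2 * (p x ^ 2 + 2 * be) + G s x * p x + Gx s x).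
  assert (Hk : k < la).
  { assert (p x ^ 2 <= (be * L) ^ 2) by (rewrite <- (pow2_abs (p x)); apply pow_incr; split; [apply Rabs_pos | lra]).
    assert (sigma ^ 2 / 2 * (p x ^ 2 + 2 * be) <= sigma ^ 2 / 2 * ((be * L) ^ 2 + 2 * be))
      by (apply Rmult_le_compat_l; lra).
    assert (G s x * p x <= Gb * (be * L)).
    { eapply Rle_trans; [apply Rle_abs|]. rewrite Rabs_mult. apply Rmult_le_compat; auto; apply Rabs_pos. }
    assert (Gx s x <= Gxb) by (eapply Rle_trans; [apply Rle_abs | exact HGx]).
    unfold k, la. lra. }
  assert (sigma ^ 2 / 2 * (p x * (p x * m s x) + 2 * be * m s x) <= sigma ^ 2 / 2 * mxx s x)
    by (apply Rmult_le_compat_l; lra).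
  assert (0 < (la - k) * (- m s x)) by (apply Rmult_lt_0_compat; lra).
  unfold k in *. nra.
Qed.

Lemma fokker_planck_nonneg : (forall x, 0 <= x <= L -> 0 <= m 0 x) ->
  forall t x, 0 <= t <= T -> 0 <= x <= L -> 0 <= m t x.
Proof.
  intros Hinit.
  assert (Hneg_of_pos : forall t x, 0 < - (E t x * m t x) -> m t x < 0)
    by (intros t x Hpos; specialize (HE t x); nra).
  assert (Hfwd : forall t1, 0 < t1 < T -> forall t x, 0 <= t <= t1 -> 0 <= x <= L -> - (E t x * m t x) <= 0).
  { intros t1 Ht1.
    apply (max_principle_forward L t1 (fun t x => - (E t x * m t x)) (fun t x => - (E t x * (mt t x - la * m t x)))
             (fun t x => - (E t x * (mx t x - p x * m t x)))
             (fun t x => - (E t x * (mxx t x - p x * mx t x - 2 * be * m t x - p x * (mx t x - p x * m t x)))));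
      try lra.
    - apply ucont_rect_opp; try lra. apply (ucont_rect_sub 0 T 0 L); try lra. apply ucont_rect_mult; auto; lra.
    - apply ucont_rect_opp; try lra. apply (ucont_rect_sub 0 T 0 L); try lra. apply ucont_rect_mult; auto; lra.
    - intros s x Hs Hx. destruct (Hder s x ltac:(lra) Hx) as [Dt [Dx Dxx]].
      pose proof (HE_t s x). pose proof (HE_x s x). pose proof (Hp_x x).
      split; [|split]; derive_from_hyps.
    - intros x Hx. specialize (Hinit x Hx). specialize (HE 0 x). nra.
    - intros s Hs Hpos. apply Hneg_of_pos in Hpos. destruct (Hrobin s ltac:(lra)) as [H0 _].
      assert (mx s 0 + be * L * m s 0 < 0)
        by (apply (robin_flux_sign (sigma ^ 2) Gb (G s 0)); auto; [apply HG; lra | lra]).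
      unfold p. specialize (HE s 0). nra.
    - intros s Hs Hpos. apply Hneg_of_pos in Hpos. destruct (Hrobin s ltac:(lra)) as [_ H1].
      assert (- mx s L + be * L * m s L < 0).
      { apply (robin_flux_sign (sigma ^ 2) Gb (- G s L)); auto; [|lra|lra].
        rewrite Rabs_Ropp. apply HG; lra. }
      unfold p. specialize (HE s L). nra.
    - intros s x Hs Hx Hpos Hwx Hwxx. apply Hneg_of_pos in Hpos. specialize (HE s x).
      assert (Hmx : mx s x = p x * m s x) by nra.
      assert (Hmxx : p x * mx s x + 2 * be * m s x <= mxx s x) by (rewrite Hmx in Hwxx |- *; nra).
      specialize (Hweighted_interior s x ltac:(lra) Hx Hpos Hmx Hmxx). nra. }
  assert (Hpos : forall t x, 0 < t < T -> 0 <= x <= L -> 0 <= m t x).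
  { intros t x Ht Hx. specialize (Hfwd t Ht t x ltac:(lra) Hx). specialize (HE t x). nra. }
  intros t x Ht Hx. destruct (Req_dec t 0) as [->|Ht0]; [apply Hinit; exact Hx|].
  destruct (Rlt_or_le t T) as [HtT|HtT]; [apply Hpos; lra|].
  cut (- m t x <= 0); [lra|].
  apply (seg_cont_le_of_interior (fun s => - m s x) 0 T); try lra.
  - apply seg_cont_opp; try lra. apply (ucont_rect_seg_cont_t 0 T 0 L); auto; lra.
  - intros s Hs. specialize (Hpos s x Hs Hx). lra.
Qed.

End FokkerPlanck.

Section ParametricIntegral.

Variables (T L : R) (f ft : R -> R -> R).
Hypotheses (HT : 0 < T) (HL : 0 < L) (Hf : ucont_rect 0 T 0 L f) (Hft : ucont_rect 0 T 0 L ft)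
  (Hder : forall t x, 0 < t < T -> 0 < x < L -> is_derive (fun s => f s x) t (ft t x)).

Let Hex : forall g, ucont_rect 0 T 0 L g -> forall t, 0 <= t <= T -> ex_RInt (g t) 0 L.
Proof. intros g Hg t Ht. apply ex_RInt_seg_cont; [exact HL|]. intros. apply (ucont_rect_seg_cont_x 0 T 0 L); auto. Qed.

Lemma RInt_param_seg_cont t : 0 <= t <= T -> seg_cont 0 T (fun s => RInt (f s) 0 L) t.
Proof.
  intros Ht eps He. destruct (Hf (eps / (2 * L))) as [d [Hd Hw]]; [apply Rdiv_lt_0_compat; lra|].
  exists d. split; [exact Hd|]. intros s Hs Hst.
  rewrite <- (RInt_minus (f s) (f t)) by (apply Hex; auto).
  eapply Rle_lt_trans; [apply (abs_RInt_le_const _ 0 L (eps / (2 * L))); [lra | |] |].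
  - apply ex_RInt_minus; apply Hex; auto.
  - intros z Hz. left. apply Hw; auto. rewrite Rminus_eq_0, Rabs_R0. exact Hd.
  - replace ((L - 0) * (eps / (2 * L))) with (eps / 2) by (field; lra). lra.
Qed.

Let Hincrement t eps : 0 < t < T -> 0 < eps -> exists d, 0 < d /\ forall h, Rabs h < d ->
  0 < t + h < T /\ forall y, 0 <= y <= L -> Rabs (f (t + h) y - f t y - h * ft t y) <= eps * Rabs h.
Proof.
  intros Ht He. destruct (Hft eps He) as [d1 [Hd1 Hw]].
  set (d := Rmin d1 (Rmin (t / 2) ((T - t) / 2))).
  assert (Hd : 0 < d) by (unfold d; repeat apply Rmin_glb_lt; lra).
  assert (d <= d1) by apply Rmin_l. assert (d <= t / 2 /\ d <= (T - t) / 2)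
    by (split; eapply Rle_trans; [apply Rmin_r | apply Rmin_l | apply Rmin_r | apply Rmin_r]).
  exists d. split; [exact Hd|]. intros h Hh. apply Rabs_lt_between in Hh. split; [lra|].
  assert (Hinterior : forall y, 0 < y < L -> Rabs (f (t + h) y - f t y - h * ft t y) <= eps * Rabs h).
  { intros y Hy.
    assert (Hmvt : exists c, Rabs (c - t) < d1 /\ 0 < c < T /\ f (t + h) y - f t y = ft c y * h).
    { destruct (Rtotal_order h 0) as [Hneg|[->|Hpos]].
      - destruct (seg_MVT (fun s => f s y) (fun s => ft s y) (t + h) t) as [c [Hc Heqc]]; try lra.
        + intros z Hz. apply (seg_cont_sub 0 T); try lra. apply (ucont_rect_seg_cont_t 0 T 0 L); auto; lra.
        + intros z Hz. apply Hder; lra.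
        + exists c. split; [apply Rabs_lt_between; lra|]. split; [lra|]. lra.
      - exists t. split; [rewrite Rminus_eq_0, Rabs_R0; lra|]. split; [lra|].
        rewrite Rplus_0_r. ring.
      - destruct (seg_MVT (fun s => f s y) (fun s => ft s y) t (t + h)) as [c [Hc Heqc]]; try lra.
        + intros z Hz. apply (seg_cont_sub 0 T); try lra. apply (ucont_rect_seg_cont_t 0 T 0 L); auto; lra.
        + intros z Hz. apply Hder; lra.
        + exists c. split; [apply Rabs_lt_between; lra|]. split; [lra|]. rewrite Heqc. ring. }
    destruct Hmvt as [c [Hc1 [Hc2 Hc3]]]. rewrite Hc3.
    replace (ft c y * h - h * ft t y) with ((ft c y - ft t y) * h) by ring.
    rewrite Rabs_mult. apply Rmult_le_compat_r; [apply Rabs_pos|]. left. apply Hw; try lra.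
    rewrite Rminus_eq_0, Rabs_R0. exact Hd1. }
  intros y Hy. apply (seg_cont_abs_le_of_interior (fun y => f (t + h) y - f t y - h * ft t y) 0 L); auto.
  apply seg_cont_minus; try lra; [apply seg_cont_minus; try lra|apply seg_cont_mult; try lra; [apply seg_cont_const|]];
    apply (ucont_rect_seg_cont_x 0 T 0 L); auto; lra.
Qed.

Lemma RInt_param_derive t : 0 < t < T -> is_derive (fun s => RInt (f s) 0 L) t (RInt (ft t) 0 L).
Proof.
  intros Ht. apply is_derive_Reals. intros eps He.
  destruct (Hincrement t (eps / (2 * L)) Ht ltac:(apply Rdiv_lt_0_compat; lra)) as [d [Hd Hinc]].
  exists (mkposreal d Hd). intros h Hh0 Hh. destruct (Hinc h Hh) as [Hth Hbound].
  assert (Hh' : 0 < Rabs h) by (apply Rabs_pos_lt; exact Hh0).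
  assert (E1 := Hex f Hf (t + h) ltac:(lra)). assert (E2 := Hex f Hf t ltac:(lra)).
  assert (E3 := Hex ft Hft t ltac:(lra)).
  assert (Hsplit : RInt (fun y => f (t + h) y - f t y - h * ft t y) 0 L
                   = RInt (f (t + h)) 0 L - RInt (f t) 0 L - h * RInt (ft t) 0 L).
  { rewrite (RInt_minus (fun y => f (t + h) y - f t y) (fun y => h * ft t y)),
            (RInt_minus (f (t + h)) (f t)), (RInt_scal (ft t)); auto.
    - apply (ex_RInt_minus (f (t + h)) (f t)); auto.
    - apply (ex_RInt_scal (ft t)). exact E3. }
  assert (Hint := abs_RInt_le_const (fun y => f (t + h) y - f t y - h * ft t y) 0 L (eps / (2 * L) * Rabs h) ltac:(lra)).
  rewrite Hsplit in Hint. specialize (Hint ltac:(apply (ex_RInt_minus (fun y => f (t + h) y - f t y) (fun y => h * ft t y));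
    [apply (ex_RInt_minus (f (t + h)) (f t)) | apply (ex_RInt_scal (ft t))]; auto) Hbound).
  replace ((RInt (f (t + h)) 0 L - RInt (f t) 0 L) / h - RInt (ft t) 0 L)
    with ((RInt (f (t + h)) 0 L - RInt (f t) 0 L - h * RInt (ft t) 0 L) / h) by (field; exact Hh0).
  unfold Rdiv. rewrite Rabs_mult, Rabs_inv.
  apply Rle_lt_trans with ((L - 0) * (eps / (2 * L) * Rabs h) * / Rabs h).
  - apply Rmult_le_compat_r; [left; apply Rinv_0_lt_compat; exact Hh' | exact Hint].
  - replace ((L - 0) * (eps / (2 * L) * Rabs h) * / Rabs h) with (eps / 2) by (field; lra). lra.
Qed.

End ParametricIntegral.

Lemma mass_conservation T L (m mt P : R -> R -> R) :
  0 < T -> 0 < L -> ucont_rect 0 T 0 L m -> ucont_rect 0 T 0 L mt ->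
  (forall t x, 0 < t < T -> 0 < x < L -> is_derive (fun s => m s x) t (mt t x)) ->
  (forall t, 0 < t < T -> (forall z, 0 <= z <= L -> seg_cont 0 L (P t) z) /\
     (forall x, 0 < x < L -> is_derive (P t) x (mt t x)) /\ P t 0 = 0 /\ P t L = 0) ->
  forall t, 0 <= t <= T -> RInt (m t) 0 L = RInt (m 0) 0 L.
Proof.
  intros HT HL Hm Hmt Hder Hflux t Ht.
  destruct (Req_dec t 0) as [->|Ht0]; [reflexivity|].
  apply (seg_const_of_derive_zero (fun s => RInt (m s) 0 L) (fun s => RInt (mt s) 0 L) 0 t); try lra.
  - intros z Hz. apply (seg_cont_sub 0 T); try lra. apply (RInt_param_seg_cont T L m); auto; lra.
  - intros s Hs. apply (RInt_param_derive T L m mt); auto; lra.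
  - intros s Hs. destruct (Hflux s ltac:(lra)) as [Hc [Hd [H0 H1]]].
    rewrite (RInt_derive_seg (P s) (mt s) 0 L HL Hc); [lra | | exact Hd].
    intros z Hz. apply (ucont_rect_seg_cont_x 0 T 0 L); auto; lra.
Qed.

(** * The Hölder norm *)

Lemma Lub_Rbar_le (E : R -> Prop) K : (forall v, E v -> v <= K) -> Rbar_le (Lub_Rbar E) (Finite K).
Proof. intros H. apply (proj2 (Lub_Rbar_correct E)). intros v Hv. apply H. exact Hv. Qed.

Lemma dist2_bounds t x s y : (t, x) <> (s, y) ->
  0 < dist2 t x s y /\ Rabs (t - s) <= dist2 t x s y /\ Rabs (x - y) <= dist2 t x s y /\
  dist2 t x s y <= Rabs (t - s) + Rabs (x - y).
Proof.
  intros Hne. unfold dist2.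
  assert (Hsq : forall a, a <> 0 -> 0 < a ^ 2)
    by (intros a Ha; destruct (Rtotal_order a 0) as [H|[H|H]]; [nra | contradiction | nra]).
  pose proof (pow2_ge_0 (t - s)). pose proof (pow2_ge_0 (x - y)).
  pose proof (Rabs_pos (t - s)). pose proof (Rabs_pos (x - y)).
  split; [|split; [|split]].
  - apply sqrt_lt_R0. destruct (Req_dec t s) as [->|Hts].
    + destruct (Req_dec x y) as [->|Hxy]; [congruence|]. specialize (Hsq (x - y) ltac:(lra)). lra.
    + specialize (Hsq (t - s) ltac:(lra)). lra.
  - rewrite <- (sqrt_pow2 (Rabs (t - s))) by lra. apply sqrt_le_1_alt. rewrite pow2_abs. lra.
  - rewrite <- (sqrt_pow2 (Rabs (x - y))) by lra. apply sqrt_le_1_alt. rewrite pow2_abs. lra.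
  - rewrite <- (sqrt_pow2 (Rabs (t - s) + Rabs (x - y))) by lra. apply sqrt_le_1_alt.
    rewrite <- (pow2_abs (t - s)), <- (pow2_abs (x - y)). nra.
Qed.

Lemma le_Rpower_third d D : 0 < d <= D -> 1 <= D ->
  d <= D * Rpower d (1 / 3) /\ sqrt d <= D * Rpower d (1 / 3).
Proof.
  intros Hd HD.
  assert (Hle : forall a, 0 < a <= 1 -> Rpower d a <= D).
  { intros a Ha. apply Rle_trans with (Rpower D a); [apply Rle_Rpower_l; lra|].
    rewrite <- (Rpower_1 D) at 2 by lra. apply Rle_Rpower; lra. }
  assert (Hpos : 0 < Rpower d (1 / 3)) by apply exp_pos.
  split.
  - rewrite <- (Rpower_1 d) at 1 by lra. replace 1 with (2 / 3 + 1 / 3) at 1 by field.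
    rewrite Rpower_plus. apply Rmult_le_compat_r; [lra | apply Hle; lra].
  - rewrite <- Rpower_sqrt by lra. replace (/ 2) with (1 / 6 + 1 / 3) by field.
    rewrite Rpower_plus. apply Rmult_le_compat_r; [lra | apply Hle; lra].
Qed.

Lemma holder13_norm_le T L u U M C : 0 < T -> 0 < L -> 0 <= M -> 0 <= C ->
  (forall t x, 0 <= t <= T -> 0 <= x <= L -> Rabs (u t x) <= U) ->
  (forall t x y, 0 <= t <= T -> 0 <= x <= L -> 0 <= y <= L -> Rabs (u t x - u t y) <= M * Rabs (x - y)) ->
  (forall t s x, 0 <= t <= T -> 0 <= s <= T -> 0 <= x <= L -> Rabs (u t x - u s x) <= C * sqrt (Rabs (t - s))) ->
  Rbar_le (holder13_norm T L u) (Finite (U + (M + C) * Rmax 1 (T + L))).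
Proof.
  intros HT HL HM HC Hbd Hlip Hhol.
  set (D := Rmax 1 (T + L)). assert (HD1 : 1 <= D) by apply Rmax_l. assert (HD2 : T + L <= D) by apply Rmax_r.
  unfold holder13_norm.
  change (Finite (U + (M + C) * D)) with (Rbar_plus (Finite U) (Finite ((M + C) * D))).
  apply Rbar_plus_le_compat.
  - apply Lub_Rbar_le. intros v [t [x [[Ht Hx] ->]]]. apply Hbd; auto.
  - apply Lub_Rbar_le. intros v [t [x [s [y [[Ht Hx] [[Hs Hy] [Hne ->]]]]]]].
    destruct (dist2_bounds t x s y Hne) as [Hd [Hts [Hxy Hsum]]].
    set (d := dist2 t x s y) in *. set (R3 := Rpower d (1 / 3)).
    assert (HR3 : 0 < R3) by apply exp_pos.
    assert (HdD : d <= D).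
    { apply Rabs_le_between in Hts. apply Rabs_le_between in Hxy.
      assert (Rabs (t - s) <= T) by (apply Rabs_le; lra). assert (Rabs (x - y) <= L) by (apply Rabs_le; lra). lra. }
    destruct (le_Rpower_third d D ltac:(lra) HD1) as [H1 H2]. fold R3 in H1, H2.
    apply Rmult_le_reg_r with R3; [exact HR3|]. unfold Rdiv. rewrite Rmult_assoc, Rinv_l, Rmult_1_r by lra.
    replace (u t x - u s y) with ((u t x - u t y) + (u t y - u s y)) by ring.
    eapply Rle_trans; [apply Rabs_triang|].
    assert (M * Rabs (x - y) <= M * (D * R3)) by (apply Rmult_le_compat_l; lra).
    assert (C * sqrt (Rabs (t - s)) <= C * (D * R3))
      by (apply Rmult_le_compat_l; [lra | eapply Rle_trans; [apply sqrt_le_1_alt; exact Hts | exact H2]]).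
    specialize (Hlip t x y Ht Hx Hy). specialize (Hhol t s y Ht Hs Hy). nra.
Qed.

(** * The mean-field game system *)

Lemma cont_on_seg_seg_cont L g : cont_on_seg L g -> forall z, 0 <= z <= L -> seg_cont 0 L g z.
Proof.
  intros Hc z Hz eps He.
  destruct (Hc z Hz (fun w => ball (g z) eps w) (locally_ball (g z) (mkposreal eps He))) as [[d Hd] Hb].
  exists d. split; [exact Hd|]. intros w Hw Hwz. exact (Hb w Hwz Hw).
Qed.

Lemma RInt_mult_density_abs_le (g w : R -> R) a b M : a <= b ->
  ex_RInt w a b -> ex_RInt (fun y => g y * w y) a b ->
  (forall y, a <= y <= b -> Rabs (g y) <= M) -> (forall y, a <= y <= b -> 0 <= w y) -> RInt w a b = 1 ->
  Rabs (RInt (fun y => g y * w y) a b) <= M.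
Proof.
  intros Hab Hw Hgw Hg Hpos Hmass.
  assert (Hup : RInt (fun y => g y * w y) a b <= RInt (fun y => M * w y) a b).
  { apply RInt_le; auto; [apply (ex_RInt_scal w); exact Hw|].
    intros y Hy. specialize (Hg y ltac:(lra)). specialize (Hpos y ltac:(lra)).
    apply Rabs_le_between in Hg. apply Rmult_le_compat_r; lra. }
  assert (Hlow : RInt (fun y => (- M) * w y) a b <= RInt (fun y => g y * w y) a b).
  { apply RInt_le; auto; [apply (ex_RInt_scal w); exact Hw|].
    intros y Hy. specialize (Hg y ltac:(lra)). specialize (Hpos y ltac:(lra)).
    apply Rabs_le_between in Hg. apply Rmult_le_compat_r; lra. }
  rewrite (RInt_scal w), Hmass in Hup, Hlow by exact Hw.
  apply Rabs_le. change (scal M 1) with (M * 1) in Hup. change (scal (- M) 1) with (- M * 1) in Hlow. lra.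
Qed.

(* Hm bounds the Hamiltonian G^2 and U bounds |u|; the factor of Rmax 1 (T + L) is the Lipschitz
   constant in x plus the 1/2-Hölder constant in t *)
Definition mfg_holder_const (L T r M K : R) : R :=
  let Hm := (/ 2 * (1 + 2 * M)) ^ 2 in
  let U := K + L ^ 2 + (2 + Hm) * T in
  U + (M + (1 + M ^ 2 / 4 + (r * U + Hm + 1) * sqrt T)) * Rmax 1 (T + L).

Section MFG.

Variables (L T r eps sigma : R) (uT m0 : R -> R) (u m : R -> R -> R).
Hypotheses (HL : 0 < L) (HT : 0 < T) (Heps : 0 < eps) (Hsig : 0 < sigma)
  (Hsol : classical_solution L T r eps sigma uT m0 u m).

Let b := 2 / (2 + eps).
Let c := eps / (2 + eps).

Let Hb : 0 < b < 1.
Proof. unfold b. split; [apply Rdiv_lt_0_compat | apply Rmult_lt_reg_r with (2 + eps); [|field_simplify]]; lra. Qed.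

Let Hc : 0 < c < 1.
Proof. unfold c. split; [apply Rdiv_lt_0_compat | apply Rmult_lt_reg_r with (2 + eps); [|field_simplify]]; lra. Qed.

Lemma Gfun_abs_le ux t x P B : Rabs (RInt (fun y => ux t y * m t y) 0 L) <= P -> Rabs (ux t x) <= B ->
  Rabs (Gfun b c L ux m t x) <= / 2 * (b + c * P + B).
Proof.
  intros HP HB. unfold Gfun. rewrite Rabs_mult, Rabs_inv, Rabs_pos_eq by lra.
  apply Rmult_le_compat_l; [lra|].
  assert (Rabs (c * RInt (fun y => ux t y * m t y) 0 L) <= c * P)
    by (rewrite Rabs_mult, Rabs_pos_eq by lra; apply Rmult_le_compat_l; lra).
  eapply Rle_trans; [apply Rabs_triang|]. rewrite Rabs_Ropp.
  eapply Rle_trans; [apply Rplus_le_compat_r, Rabs_triang|]. rewrite (Rabs_pos_eq b) by lra. lra.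
Qed.

Lemma classical_solution_m_nonneg : (forall x, 0 <= x <= L -> 0 <= m0 x) ->
  forall t x, 0 <= t <= T -> 0 <= x <= L -> 0 <= m t x.
Proof.
  intros Hm0.
  destruct Hsol as [ut [ux [uxx [mt [mx [mxx [_ [_ [Cux [Cuxx [Cm [_ [Cmx [_
    [Hder [_ [Hfp [Hdata [_ Hbcm]]]]]]]]]]]]]]]]]]].
  apply cont_on_rect_ucont in Cux, Cuxx, Cm, Cmx; try lra.
  set (G := Gfun b c L ux m).
  destruct (ucont_rect_bounded 0 T 0 L (fun t x => ux t x * m t x)) as [Bum Hum]; try lra.
  { apply ucont_rect_mult; auto; lra. }
  destruct (ucont_rect_bounded 0 T 0 L ux) as [Bux Hux]; auto; try lra.
  destruct (ucont_rect_bounded 0 T 0 L uxx) as [Buxx Huxx]; auto; try lra.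
  assert (HG_x : forall t x, 0 < t < T -> 0 < x < L -> is_derive (G t) x (- / 2 * uxx t x)).
  { intros t x Ht Hx. destruct (Hder t x Ht Hx) as [_ [_ [Dxx _]]]. unfold G, Gfun. derive_from_hyps. }
  apply (fokker_planck_nonneg L T sigma (/ 2 * (b + c * ((L - 0) * Bum) + Bux)) (/ 2 * Buxx)
           m mt mx mxx G (fun t x => - / 2 * uxx t x)); auto.
  - intros t x Ht Hx. destruct (Hder t x Ht Hx) as [_ [_ [_ Dm]]]. exact Dm.
  - intros t x Ht Hx. destruct (Hder t x Ht Hx) as [_ [_ [_ [_ [Dx _]]]]].
    assert (Dprod : is_derive (fun y => G t y * m t y) x (- / 2 * uxx t x * m t x + G t x * mx t x))
      by (pose proof (HG_x t x Ht Hx); derive_from_hyps).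
    assert (Hflux := is_derive_unique _ _ _ Dprod). unfold G, b, c in Hflux |- *.
    rewrite (is_derive_unique _ _ _ (Hfp t x Ht Hx)) in Hflux. lra.
  - intros t x Ht Hx. apply Gfun_abs_le; [|apply Hux; lra].
    apply abs_RInt_le_const; [lra | | intros; apply Hum; lra].
    apply ex_RInt_seg_cont; [exact HL|]. intros z Hz.
    apply seg_cont_mult; auto; apply (ucont_rect_seg_cont_x 0 T 0 L); auto; lra.
  - intros t x Ht Hx. rewrite Rabs_mult, Rabs_Ropp, Rabs_inv, Rabs_pos_eq by lra.
    apply Rmult_le_compat_l; [lra | apply Huxx; lra].
  - intros t Ht. apply Hbcm. lra.
  - intros x Hx. rewrite (proj1 (Hdata x Hx)). apply Hm0. exact Hx.
Qed.

Lemma classical_solution_mass : forall t, 0 <= t <= T -> RInt (m t) 0 L = RInt m0 0 L.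
Proof.
  destruct Hsol as [ut [ux [uxx [mt [mx [mxx [_ [_ [Cux [_ [Cm [Cmt [Cmx [_
    [Hder [_ [Hfp [Hdata [_ Hbcm]]]]]]]]]]]]]]]]]]].
  apply cont_on_rect_ucont in Cux, Cm, Cmt, Cmx; try lra.
  intros t Ht.
  rewrite (mass_conservation T L m mt (fun t y => sigma ^ 2 / 2 * mx t y + Gfun b c L ux m t y * m t y)); auto.
  - apply RInt_ext. intros x Hx. rewrite Rmin_left, Rmax_right in Hx by lra. apply Hdata. lra.
  - intros s x Hs Hx. apply Hder; auto.
  - intros s Hs. split; [|split; [|split]].
    + intros z Hz. unfold Gfun. seg_cont_auto; apply (ucont_rect_seg_cont_x 0 T 0 L); auto; lra.
    + intros x Hx. destruct (Hder s x Hs Hx) as [_ [_ [_ [_ [_ Dxx]]]]].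
      replace (mt s x) with (sigma ^ 2 / 2 * mxx s x + (mt s x - sigma ^ 2 / 2 * mxx s x)) by ring.
      apply (is_derive_plus (fun y => sigma ^ 2 / 2 * mx s y) (fun y => Gfun b c L ux m s y * m s y));
        [derive_from_hyps | exact (Hfp s x Hs Hx)].
    + apply Hbcm. lra.
    + apply Hbcm. lra.
Qed.

Lemma classical_solution_terminal : forall x, 0 <= x <= L -> u T x = uT x.
Proof. destruct Hsol as [ut [ux [uxx [mt [mx [mxx Hs]]]]]]. intros x Hx. apply Hs. exact Hx. Qed.

Lemma classical_solution_hjb : (forall x, 0 <= x <= L -> 0 <= m0 x) -> RInt m0 0 L = 1 ->
  exists ut ux uxx,
  hjb_solution L T r sigma (fun t p => (/ 2 * (b + c * RInt (fun y => ux t y * m t y) 0 L - p)) ^ 2)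
    u ut ux uxx /\
  forall M, (forall t x, 0 <= t <= T -> 0 <= x <= L -> Rabs (ux t x) <= M) ->
    forall t, 0 <= t <= T -> Rabs (RInt (fun y => ux t y * m t y) 0 L) <= M.
Proof.
  intros Hm0 Hm0_mass.
  assert (Hmpos := classical_solution_m_nonneg Hm0). assert (Hmass := classical_solution_mass).
  destruct Hsol as [ut [ux [uxx [mt [mx [mxx [Cu [_ [Cux [_ [Cm [_ [_ [_
    [Hder [Hhjb [_ [_ [Hbcu _]]]]]]]]]]]]]]]]]]].
  apply cont_on_rect_ucont in Cu, Cux, Cm; try lra.
  exists ut, ux, uxx. split; [split; [split|]|].
  - exact Cu.
  - exact Cux.
  - intros t x Ht Hx. destruct (Hder t x Ht Hx) as [Dt [Dx [Dxx _]]]. auto.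
  - exact Hbcu.
  - exact Hhjb.
  - intros M Hux t Ht.
    apply (RInt_mult_density_abs_le (ux t) (m t) 0 L M); try lra.
    + apply ex_RInt_seg_cont; [exact HL|]. intros z Hz. apply (ucont_rect_seg_cont_x 0 T 0 L); auto.
    + apply ex_RInt_seg_cont; [exact HL|]. intros z Hz.
      apply seg_cont_mult; auto; apply (ucont_rect_seg_cont_x 0 T 0 L); auto.
    + intros y Hy. apply Hux; auto.
    + intros y Hy. apply Hmpos; auto.
    + rewrite Hmass; auto.
Qed.

Lemma coupling_sq_bound P p M : Rabs P <= M -> Rabs p <= M ->
  0 <= (/ 2 * (b + c * P - p)) ^ 2 <= (/ 2 * (1 + 2 * M)) ^ 2.
Proof.
  intros HP Hp. split; [apply pow2_ge_0|].
  rewrite <- (pow2_abs (/ 2 * _)). apply pow_incr. split; [apply Rabs_pos|].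
  rewrite Rabs_mult, Rabs_inv, Rabs_pos_eq by lra. apply Rmult_le_compat_l; [lra|].
  apply Rabs_le_between in HP. apply Rabs_le_between in Hp.
  assert (- M <= c * P <= M) by (split; nra).
  apply Rabs_le. lra.
Qed.

Lemma classical_solution_holder13 M K : 0 < r -> sigma <= 1 -> 0 < M ->
  (forall x y, 0 <= x <= L -> 0 <= y <= L -> Rabs (uT x - uT y) <= M * Rabs (x - y)) ->
  (forall x, 0 <= x <= L -> 0 <= uT x <= K) ->
  (forall x, 0 <= x <= L -> 0 <= m0 x) -> RInt m0 0 L = 1 ->
  Rbar_le (holder13_norm T L u) (Finite (mfg_holder_const L T r M K)).
Proof.
  intros Hr Hsig1 HM HuT_lip HuT_bd Hm0 Hm0_mass.
  assert (HK : 0 <= K) by (specialize (HuT_bd 0 ltac:(lra)); lra).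
  set (Hm := (/ 2 * (1 + 2 * M)) ^ 2). assert (HHm : 0 <= Hm) by apply pow2_ge_0.
  set (U := K + L ^ 2 + (2 + Hm) * T).
  destruct (classical_solution_hjb Hm0 Hm0_mass) as [ut [ux [uxx [Hhjb Hmean]]]].
  set (Hcpl := fun t p => (/ 2 * (b + c * RInt (fun y => ux t y * m t y) 0 L - p)) ^ 2) in Hhjb.
  assert (Hterm := classical_solution_terminal).
  assert (Hlip : forall t x y, 0 <= t <= T -> 0 <= x <= L -> 0 <= y <= L ->
                   Rabs (u t x - u t y) <= M * Rabs (x - y)).
  { apply (hjb_lipschitz L T r sigma Hcpl u ut ux uxx); auto; try lra.
    intros x y Hx Hy. rewrite !Hterm by assumption. auto. }
  assert (Hux := c12_neumann_ux_bound L T u ut ux uxx M HL HT (proj1 Hhjb) Hlip).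
  assert (HH : forall t x, 0 < t < T -> 0 < x < L ->
     0 <= (/ 2 * (b + c * RInt (fun y => ux t y * m t y) 0 L - ux t x)) ^ 2 <= Hm)
    by (intros t x Ht Hx; apply coupling_sq_bound; [apply Hmean | apply Hux]; auto; lra).
  assert (Hbd : forall t x, 0 <= t <= T -> 0 <= x <= L -> Rabs (u t x) <= U).
  { apply (hjb_sup_bound L T r sigma Hcpl u ut ux uxx); auto; try lra.
    intros x Hx. rewrite Hterm by assumption. auto. }
  unfold mfg_holder_const. cbv zeta. fold Hm U.
  apply holder13_norm_le; auto; try lra.
  - assert (0 <= r * U) by (apply Rmult_le_pos; [lra | specialize (Hbd 0 0 ltac:(lra) ltac:(lra));
      pose proof (Rabs_pos (u 0 0)); lra]).
    pose proof (sqrt_pos T). assert (0 <= (r * U + Hm + 1) * sqrt T) by (apply Rmult_le_pos; lra).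
    pose proof (pow2_ge_0 M). lra.
  - apply (hjb_time_holder L T r sigma Hcpl u ut ux uxx); auto; lra.
Qed.

End MFG.

Lemma C2gamma_lipschitz L gamma g g1 g2 : 0 < L -> C2gamma L gamma g g1 g2 ->
  exists M, 0 < M /\ forall x y, 0 <= x <= L -> 0 <= y <= L -> Rabs (g x - g y) <= M * Rabs (x - y).
Proof.
  intros HL [Hg [Hg1 [_ [Hdg _]]]].
  destruct (seg_cont_max_attained (fun x => Rabs (g1 x)) 0 L ltac:(lra)) as [z [Hz Hmax]].
  { intros z Hz. apply seg_cont_abs; [exact Hz|]. apply cont_on_seg_seg_cont; auto. }
  exists (Rabs (g1 z) + 1). split; [pose proof (Rabs_pos (g1 z)); lra|].
  assert (Hordered : forall x y, 0 <= y < x -> x <= L -> Rabs (g x - g y) <= (Rabs (g1 z) + 1) * Rabs (x - y)).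
  { intros x y Hy Hx. destruct (seg_MVT g g1 y x ltac:(lra)) as [c [Hc Hmvt]].
    - intros w Hw. apply (seg_cont_sub 0 L); try lra. apply cont_on_seg_seg_cont; auto; lra.
    - intros w Hw. apply Hdg. lra.
    - rewrite Hmvt, Rabs_mult. apply Rmult_le_compat_r; [apply Rabs_pos|].
      specialize (Hmax c ltac:(lra)). lra. }
  intros x y Hx Hy. destruct (Rtotal_order y x) as [Hlt|[->|Hgt]].
  - apply Hordered; lra.
  - rewrite !Rminus_eq_0, Rabs_R0. lra.
  - rewrite Rabs_minus_sym, (Rabs_minus_sym x). apply Hordered; lra.
Qed.

Lemma cont_on_seg_bounded_above L g : 0 <= L -> cont_on_seg L g ->
  exists K, forall x, 0 <= x <= L -> g x <= K.
Proof.
  intros HL Hg. destruct (seg_cont_max_attained g 0 L HL (cont_on_seg_seg_cont L g Hg)) as [z [_ Hmax]].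
  exists (g z). exact Hmax.
Qed.

Theorem lemma4p2
  (L T r eps gamma : R) (uT uT1 uT2 m01 m02 m0 : R -> R)
  (HL : 0 < L) (HT : 0 < T) (Hr : 0 < r) (Heps : 0 < eps)
  (Hgamma : 0 < gamma)
  (HuT : C2gamma L gamma uT uT1 uT2)
  (Hm0 : C2gamma L gamma m0 m01 m02)
  (HuT_bc : uT1 0 = 0 /\ uT1 L = 0)
  (Hm0_bc : m0 0 = 0 /\ m01 0 = 0 /\ m0 L = 0 /\ m01 L = 0)
  (Hm0_pos : forall x, 0 <= x <= L -> 0 <= m0 x)
  (Hm0_mass : RInt m0 0 L = 1)
  (HuT_pos : forall x, 0 <= x <= L -> 0 <= uT x) :
  exists C : R,
    forall sigma : R, 0 < sigma <= 1 ->
    forall u m : R -> R -> R,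
      classical_solution L T r eps sigma uT m0 u m ->
      Rbar_le (holder13_norm T L u) (Finite C).
Proof.
  destruct (C2gamma_lipschitz L gamma uT uT1 uT2 HL HuT) as [M [HM HuT_lip]].
  destruct (cont_on_seg_bounded_above L uT ltac:(lra) (proj1 HuT)) as [K HK].
  exists (mfg_holder_const L T r M K).
  intros sigma Hsig u m Hsol.
  apply (classical_solution_holder13 L T r eps sigma uT m0 u m); auto; try lra.
Qed.
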